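(* For $\tau$ in the upper half-plane: (a) $x=\mathfrak{b}(\tau)$ and $y=\mathfrak{b}(2\tau)$ satisfy $x^2y^2+4y^2-16x=0$; (b) $(\mathfrak{b}(\tau)+2)^4\,\mathfrak{b}^4(4\tau)=2^8\left(\mathfrak{b}^3(\tau)+4\mathfrak{b}(\tau)\right)$.
   Context: $q=e^{2\pi i\tau}$, $q^r:=e^{2\pi i r\tau}$, and $\mathfrak{b}(\tau)=2\prod_{n\ge1}\left(\frac{1-q^{n/2-1/4}}{1+q^{n/2-1/4}}\right)^2$ (equivalently $2\mathfrak{f}_1(\tau/2)^2/\mathfrak{f}(\tau/2)^2$ with Weber–Schläfli functions $\mathfrak{f},\mathfrak{f}_1$). *)

From Stdlib Require Import Reals.
From Coquelicot Require Export Coquelicot.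
Open Scope R_scope.

(* q^r := e^{2 pi i r tau}, written out via the real exponential,
   cosine and sine:  e^{2 pi i r (a + i b)} = e^{-2 pi r b} (cos(2 pi r a) + i sin(2 pi r a)). *)
Definition qpow (tau : C) (r : R) : C :=
  (exp (- 2 * PI * r * Im tau) * cos (2 * PI * r * Re tau),
   exp (- 2 * PI * r * Im tau) * sin (2 * PI * r * Re tau)).

Definition bfactor (tau : C) (n : nat) : C :=
  let e := INR n / 2 - / 4 in
  let t := Cdiv (Cminus (RtoC 1) (qpow tau e)) (Cplus (RtoC 1) (qpow tau e)) in
  Cmult t t.

Fixpoint bpartial (tau : C) (N : nat) : C :=
  match N with
  | O => RtoC 1
  | S k => Cmult (bpartial tau k) (bfactor tau (S k))
  end.

Definition bfun (tau : C) : C :=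
  Cmult (RtoC 2) (@lim (CompleteNormedModule.CompleteSpace _ C_CompleteNormedModule)
                        (filtermap (bpartial tau) eventually)).

(* Write [p = q^(1/4)], so that [b(tau) = 2 prod_k ((1 - p^(2k+1)) / (1 + p^(2k+1)))^2].
   Jacobi's triple product identity, in the finite form obtained from the q-binomial
   theorem, gives
     prod_(k<n) (1 + s p^(2k+1))^2 = sum_(|j|<=n) [2n, n+j]_(p^2) s^j p^(j^2)   (s = 1, -1).
   Dividing by the central Gaussian binomial [2n, n]_(p^2) and letting n go to infinity
   (Tannery's theorem) turns the right-hand side into theta_3(p) or theta_4(p), with the
   same normalisation for both signs, hence [b(tau) = 2 theta_4(p) / theta_3(p)].
   Rearranging the double series for theta(p^2)^2 by the parity of the index gives the
   duplication formulas
     theta_3(p)^2 + theta_4(p)^2 = 2 theta_3(p^2)^2,   theta_3(p) theta_4(p) = theta_4(p^2)^2,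
   which make (a) an identity between theta quotients; (b) follows by applying (a) at
   [tau] and [2 tau] and eliminating [b(2 tau)]. *)

From Stdlib Require Import Reals Lra Lia Psatz ZArith FunctionalExtensionality.
From Coquelicot Require Import Coquelicot.

Local Open Scope R_scope.

Lemma Cmod_minus_sym (a b : C) : Cmod (a - b)%C = Cmod (b - a)%C.
Proof. replace (a - b)%C with (- (b - a))%C by ring. apply Cmod_opp. Qed.

Lemma Cmod_minus_triangle (a b c : C) : Cmod (a - b)%C <= Cmod (a - c)%C + Cmod (c - b)%C.
Proof. replace (a - b)%C with ((a - c) + (c - b))%C by ring. apply Cmod_triangle. Qed.

Lemma Cmod_reverse_triangle (a b : C) : Cmod a - Cmod b <= Cmod (a - b)%C.
Proof.
  pose proof (Cmod_triangle (a - b)%C b) as H.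
  replace (a - b + b)%C with a in H by ring. lra.
Qed.

Definition cvC (u : nat -> C) (l : C) : Prop :=
  forall eps, 0 < eps -> exists N, forall n, (N <= n)%nat -> Cmod (u n - l)%C < eps.

Definition CauchyC (u : nat -> C) : Prop :=
  forall eps, 0 < eps ->
  exists N, forall n m, (N <= n)%nat -> (N <= m)%nat -> Cmod (u n - u m)%C < eps.

Definition limC (u : nat -> C) : C :=
  @lim (CompleteNormedModule.CompleteSpace _ C_CompleteNormedModule) (filtermap u eventually).

Lemma cvC_unique u l1 l2 : cvC u l1 -> cvC u l2 -> l1 = l2.
Proof.
  intros H1 H2.
  destruct (Req_dec (Cmod (l1 - l2)%C) 0) as [E|E].
  { apply Cmod_eq_0 in E. replace l1 with ((l1 - l2) + l2)%C by ring. rewrite E. ring. }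
  assert (P : 0 < Cmod (l1 - l2)%C) by (pose proof (Cmod_ge_0 (l1 - l2)%C); lra).
  destruct (H1 _ (Rdiv_lt_0_compat _ 2 P ltac:(lra))) as [N1 HN1].
  destruct (H2 _ (Rdiv_lt_0_compat _ 2 P ltac:(lra))) as [N2 HN2].
  specialize (HN1 (max N1 N2) ltac:(lia)). specialize (HN2 (max N1 N2) ltac:(lia)).
  pose proof (Cmod_minus_triangle l1 l2 (u (max N1 N2))) as T.
  rewrite (Cmod_minus_sym l1 (u _)) in T. lra.
Qed.

Lemma cvC_CauchyC u l : cvC u l -> CauchyC u.
Proof.
  intros H e He. destruct (H (e / 2) ltac:(lra)) as [N HN]. exists N. intros n m Hn Hm.
  pose proof (Cmod_minus_triangle (u n) (u m) l) as T.
  pose proof (HN n Hn). pose proof (HN m Hm). rewrite (Cmod_minus_sym l) in T. lra.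
Qed.

(* Coquelicot's balls on [C] are boxes, and a box of radius [eps] lies in the
   disc of radius [sqrt 2 * eps]. *)
Lemma CauchyC_cvC u : CauchyC u -> cvC u (limC u).
Proof.
  intros H e He.
  set (F := filtermap u eventually).
  assert (PF : ProperFilter F) by (apply filtermap_proper_filter, eventually_filter).
  assert (CF : cauchy F).
  { intros eps. destruct (H eps (cond_pos eps)) as [N HN]. exists (u N), N. intros n Hn.
    apply C_NormedModule_mixin_compat1. apply HN; lia. }
  destruct (@complete_cauchy (CompleteNormedModule.CompleteSpace _ C_CompleteNormedModule)
              F PF CF (mkposreal (e / 2) ltac:(lra))) as [N HN].
  exists N. intros n Hn. specialize (HN n Hn).
  apply C_NormedModule_mixin_compat2 in HN. simpl in HN.
  assert (sqrt 2 < 2).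
  { rewrite <- (sqrt_square 2) at 2 by lra. apply sqrt_lt_1; lra. }
  apply Rlt_trans with (sqrt 2 * (e / 2)); [exact HN | nra].
Qed.

Lemma limC_cvC u l : cvC u l -> limC u = l.
Proof.
  intros H. apply (cvC_unique u); [apply CauchyC_cvC, (cvC_CauchyC u l) |]; exact H.
Qed.

Lemma cvC_const c : cvC (fun _ => c) c.
Proof.
  intros e He. exists O. intros. replace (c - c)%C with (RtoC 0) by ring. rewrite Cmod_0. lra.
Qed.

Lemma cvC_ext_eventually u v l N0 :
  (forall n, (N0 <= n)%nat -> u n = v n) -> cvC u l -> cvC v l.
Proof.
  intros E H e He. destruct (H e He) as [N HN]. exists (max N N0). intros.
  rewrite <- E by lia. apply HN; lia.
Qed.

Lemma cvC_ext u v l : (forall n, u n = v n) -> cvC u l -> cvC v l.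
Proof. intros E. apply (cvC_ext_eventually u v l O). auto. Qed.

Lemma cvC_plus u v l m : cvC u l -> cvC v m -> cvC (fun n => u n + v n)%C (l + m)%C.
Proof.
  intros Hu Hv e He.
  destruct (Hu (e / 2) ltac:(lra)) as [N1 H1]. destruct (Hv (e / 2) ltac:(lra)) as [N2 H2].
  exists (max N1 N2). intros n Hn.
  replace (u n + v n - (l + m))%C with ((u n - l) + (v n - m))%C by ring.
  eapply Rle_lt_trans; [apply Cmod_triangle |].
  specialize (H1 n ltac:(lia)). specialize (H2 n ltac:(lia)). lra.
Qed.

Lemma cvC_opp u l : cvC u l -> cvC (fun n => - u n)%C (- l)%C.
Proof.
  intros Hu e He. destruct (Hu e He) as [N H]. exists N. intros n Hn.
  replace (- u n - - l)%C with (- (u n - l))%C by ring. rewrite Cmod_opp. auto.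
Qed.

Lemma cvC_minus u v l m : cvC u l -> cvC v m -> cvC (fun n => u n - v n)%C (l - m)%C.
Proof. intros. apply cvC_plus, cvC_opp; assumption. Qed.

Lemma cvC_bounded u l : cvC u l -> exists M N, 0 < M /\ forall n, (N <= n)%nat -> Cmod (u n) <= M.
Proof.
  intros H. destruct (H 1 ltac:(lra)) as [N HN]. exists (Cmod l + 1), N.
  split; [pose proof (Cmod_ge_0 l); lra |].
  intros n Hn. specialize (HN n Hn). pose proof (Cmod_reverse_triangle (u n) l). lra.
Qed.

Lemma cvC_mult u v l m : cvC u l -> cvC v m -> cvC (fun n => u n * v n)%C (l * m)%C.
Proof.
  intros Hu Hv e He.
  destruct (cvC_bounded u l Hu) as [M [N0 [HM HB]]].
  set (K := Cmod m + 1).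
  assert (HK : 0 < K) by (unfold K; pose proof (Cmod_ge_0 m); lra).
  destruct (Hu (e / (2 * K))) as [N1 H1]; [apply Rdiv_lt_0_compat; lra |].
  destruct (Hv (e / (2 * M))) as [N2 H2]; [apply Rdiv_lt_0_compat; lra |].
  exists (max N0 (max N1 N2)). intros n Hn.
  specialize (H1 n ltac:(lia)). specialize (H2 n ltac:(lia)). specialize (HB n ltac:(lia)).
  replace (u n * v n - l * m)%C with (u n * (v n - m) + (u n - l) * m)%C by ring.
  eapply Rle_lt_trans; [apply Cmod_triangle |]. rewrite !Cmod_mult.
  assert (A1 : Cmod (u n) * Cmod (v n - m)%C <= M * (e / (2 * M))).
  { apply Rmult_le_compat; try apply Cmod_ge_0; lra. }
  assert (A2 : Cmod (u n - l)%C * Cmod m < e / (2 * K) * K).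
  { apply Rle_lt_trans with (Cmod (u n - l)%C * K).
    - apply Rmult_le_compat_l; [apply Cmod_ge_0 | unfold K; lra].
    - apply Rmult_lt_compat_r; lra. }
  replace (M * (e / (2 * M))) with (e / 2) in A1 by (field; lra).
  replace (e / (2 * K) * K) with (e / 2) in A2 by (field; lra).
  lra.
Qed.

Lemma cvC_inv u l : cvC u l -> l <> RtoC 0 -> cvC (fun n => / u n)%C (/ l)%C.
Proof.
  intros Hu Hl e He.
  assert (Pl : 0 < Cmod l) by (apply Cmod_gt_0; auto).
  destruct (Hu (Cmod l / 2) ltac:(lra)) as [N0 H0].
  destruct (Hu (e * (Cmod l * (Cmod l / 2)))) as [N1 H1].
  { apply Rmult_lt_0_compat; [lra | apply Rmult_lt_0_compat; lra]. }
  exists (max N0 N1). intros n Hn.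
  specialize (H0 n ltac:(lia)). specialize (H1 n ltac:(lia)).
  assert (Hun : Cmod l / 2 <= Cmod (u n)).
  { pose proof (Cmod_reverse_triangle l (u n)). rewrite Cmod_minus_sym in H0. lra. }
  assert (Hu0 : u n <> RtoC 0) by (intro E; rewrite E, Cmod_0 in Hun; lra).
  replace (/ u n - / l)%C with ((l - u n) / (u n * l))%C by (field; auto).
  rewrite Cmod_div by (apply Cmult_neq_0; auto). rewrite Cmod_mult, Cmod_minus_sym.
  apply Rmult_lt_reg_r with (Cmod (u n) * Cmod l); [apply Rmult_lt_0_compat; lra |].
  unfold Rdiv. rewrite Rmult_assoc, Rinv_l, Rmult_1_r by (apply Rgt_not_eq, Rmult_lt_0_compat; lra).
  apply Rlt_le_trans with (e * (Cmod l * (Cmod l / 2))); [exact H1 |].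
  rewrite (Rmult_comm (Cmod (u n))). apply Rmult_le_compat_l; [lra |].
  apply Rmult_le_compat_l; lra.
Qed.

Lemma cvC_div u v l m :
  cvC u l -> cvC v m -> m <> RtoC 0 -> cvC (fun n => u n / v n)%C (l / m)%C.
Proof. intros. apply cvC_mult, cvC_inv; assumption. Qed.

Lemma cvC_shift_inv u l k : cvC (fun n => u (n + k)%nat) l -> cvC u l.
Proof.
  intros H e He. destruct (H e He) as [N HN]. exists (N + k)%nat. intros n Hn.
  replace n with ((n - k) + k)%nat by lia. apply HN. lia.
Qed.

Lemma cvC_subseq u l (phi : nat -> nat) :
  (forall n, (n <= phi n)%nat) -> cvC u l -> cvC (fun n => u (phi n)) l.
Proof.
  intros Hp H e He. destruct (H e He) as [N HN]. exists N. intros. apply HN.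
  specialize (Hp n). lia.
Qed.

Lemma cvC_dist_le u l c K N :
  cvC u l -> (forall n, (N <= n)%nat -> Cmod (u n - c)%C <= K) -> Cmod (l - c)%C <= K.
Proof.
  intros H HB. apply Rnot_lt_le. intro Hlt.
  destruct (H (Cmod (l - c)%C - K) ltac:(lra)) as [N1 HN1].
  specialize (HN1 (max N N1) ltac:(lia)). specialize (HB (max N N1) ltac:(lia)).
  pose proof (Cmod_minus_triangle l c (u (max N N1))) as T.
  rewrite (Cmod_minus_sym l (u _)) in T. lra.
Qed.

Lemma cvC_Cmod_ge u l c : cvC u l -> (forall n, c <= Cmod (u n)) -> c <= Cmod l.
Proof.
  intros H Hc. apply Rnot_lt_le. intros Hlt.
  destruct (H (c - Cmod l) ltac:(lra)) as [N HN]. specialize (HN N (le_n _)).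
  specialize (Hc N). pose proof (Cmod_reverse_triangle (u N) l). lra.
Qed.

Lemma cvC_pow_0 (z : C) k : Cmod z < 1 -> cvC (fun n => z ^ (n + k))%C (RtoC 0).
Proof.
  intros Hz e He.
  assert (Hz' : Rabs (Cmod z) < 1) by (rewrite Rabs_right; [lra | apply Rle_ge, Cmod_ge_0]).
  destruct (pow_lt_1_zero (Cmod z) Hz' e He) as [N HN].
  exists N. intros n Hn. replace (z ^ (n + k) - 0)%C with (z ^ (n + k))%C by ring.
  rewrite Cmod_pow. specialize (HN (n + k)%nat ltac:(lia)).
  rewrite Rabs_right in HN; [exact HN | apply Rle_ge, pow_le, Cmod_ge_0].
Qed.

(* [csum f n] and [rsum f n] sum over [i < n], unlike Coquelicot's [sum_n]. *)
Fixpoint csum (f : nat -> C) (n : nat) : C :=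
  match n with O => RtoC 0 | S k => Cplus (csum f k) (f k) end.
Fixpoint rsum (f : nat -> R) (n : nat) : R :=
  match n with O => 0 | S k => rsum f k + f k end.
Fixpoint cprod (f : nat -> C) (n : nat) : C :=
  match n with O => RtoC 1 | S k => Cmult (cprod f k) (f k) end.

Lemma csum_ext f g n : (forall i, (i < n)%nat -> f i = g i) -> csum f n = csum g n.
Proof.
  induction n as [|n IH]; simpl; intros H; [reflexivity |].
  rewrite IH by (intros; apply H; lia). rewrite H by lia. reflexivity.
Qed.

Lemma cprod_ext f g n : (forall i, (i < n)%nat -> f i = g i) -> cprod f n = cprod g n.
Proof.
  induction n as [|n IH]; simpl; intros H; [reflexivity |].
  rewrite IH by (intros; apply H; lia). rewrite H by lia. reflexivity.
Qed.

Lemma csum_plus f g n : csum (fun i => f i + g i)%C n = (csum f n + csum g n)%C.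
Proof. induction n as [|n IH]; simpl; [ring | rewrite IH; ring]. Qed.

Lemma csum_scal c f n : csum (fun i => c * f i)%C n = (c * csum f n)%C.
Proof. induction n as [|n IH]; simpl; [ring | rewrite IH; ring]. Qed.

Lemma csum_0 n : csum (fun _ => RtoC 0) n = RtoC 0.
Proof. induction n as [|n IH]; simpl; [reflexivity | rewrite IH; ring]. Qed.

Lemma csum_first f n : csum f (S n) = (f O + csum (fun i => f (S i)) n)%C.
Proof.
  induction n as [|n IH]; [simpl; ring |].
  change (csum f (S (S n))) with (csum f (S n) + f (S n))%C. rewrite IH. simpl. ring.
Qed.

Lemma csum_split f m n : csum f (m + n) = (csum f m + csum (fun i => f (m + i)%nat) n)%C.
Proof.
  induction n as [|n IH]; simpl; [rewrite Nat.add_0_r; ring |].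
  rewrite Nat.add_succ_r. simpl. rewrite IH. ring.
Qed.

Lemma csum_rev f n : csum f n = csum (fun i => f (n - 1 - i)%nat) n.
Proof.
  induction n as [|n IH]; [reflexivity |].
  change (csum f (S n)) with (csum f n + f n)%C. rewrite csum_first, IH.
  replace (S n - 1 - 0)%nat with n by lia. rewrite Cplus_comm. f_equal.
  apply csum_ext. intros. f_equal. lia.
Qed.

Lemma csum_zero_tail f n m :
  (forall i, (n <= i)%nat -> f i = RtoC 0) -> (n <= m)%nat -> csum f m = csum f n.
Proof.
  intros H Hm. replace m with (n + (m - n))%nat by lia. rewrite csum_split.
  rewrite (csum_ext (fun i => f (n + i)%nat) (fun _ => RtoC 0)) by (intros; apply H; lia).
  rewrite csum_0. ring.
Qed.

Lemma csum_even_odd f n :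
  csum f (2 * n) = (csum (fun i => f (2 * i)%nat) n + csum (fun i => f (2 * i + 1)%nat) n)%C.
Proof.
  induction n as [|n IH]; [simpl; ring |].
  replace (2 * S n)%nat with (S (S (2 * n))) by lia.
  change (csum f (S (S (2 * n)))) with (csum f (2 * n) + f (2 * n)%nat + f (S (2 * n)))%C.
  rewrite IH. replace (S (2 * n)) with (2 * n + 1)%nat by lia. simpl. ring.
Qed.

Lemma Cmod_csum_le f n : Cmod (csum f n) <= rsum (fun i => Cmod (f i)) n.
Proof.
  induction n as [|n IH]; simpl; [rewrite Cmod_0; lra |].
  eapply Rle_trans; [apply Cmod_triangle | lra].
Qed.

Lemma rsum_scal c f n : rsum (fun i => c * f i) n = c * rsum f n.
Proof. induction n as [|n IH]; simpl; [ring | rewrite IH; ring]. Qed.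

Lemma rsum_le f g n : (forall i, f i <= g i) -> rsum f n <= rsum g n.
Proof. intros H. induction n as [|n IH]; simpl; [lra | specialize (H n); lra]. Qed.

Lemma rsum_le_mono f n m : (forall i, 0 <= f i) -> (n <= m)%nat -> rsum f n <= rsum f m.
Proof. intros H Hm. induction Hm as [|m Hm IH]; simpl; [lra | specialize (H m); lra]. Qed.

Lemma rsum_split f m n : rsum f (m + n) = rsum f m + rsum (fun i => f (m + i)%nat) n.
Proof.
  induction n as [|n IH]; simpl; [rewrite Nat.add_0_r; ring |].
  rewrite Nat.add_succ_r. simpl. rewrite IH. ring.
Qed.

Lemma cprod_first f n : cprod f (S n) = (f O * cprod (fun i => f (S i)) n)%C.
Proof.
  induction n as [|n IH]; [simpl; ring |].
  change (cprod f (S (S n))) with (cprod f (S n) * f (S n))%C. rewrite IH. simpl. ring.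
Qed.

Lemma cprod_split f m n : cprod f (m + n) = (cprod f m * cprod (fun i => f (m + i)%nat) n)%C.
Proof.
  induction n as [|n IH]; simpl; [rewrite Nat.add_0_r; ring |].
  rewrite Nat.add_succ_r. simpl. rewrite IH. ring.
Qed.

Lemma cprod_rev f n : cprod f n = cprod (fun i => f (n - 1 - i)%nat) n.
Proof.
  induction n as [|n IH]; [reflexivity |].
  change (cprod f (S n)) with (cprod f n * f n)%C. rewrite cprod_first, IH.
  replace (S n - 1 - 0)%nat with n by lia. rewrite Cmult_comm. f_equal.
  apply cprod_ext. intros. f_equal. lia.
Qed.

Lemma cprod_mult f g n : cprod (fun i => f i * g i)%C n = (cprod f n * cprod g n)%C.
Proof. induction n as [|n IH]; simpl; [ring | rewrite IH; ring]. Qed.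

Lemma pow_le_one t n : 0 <= t <= 1 -> t ^ n <= 1.
Proof. intros. induction n; simpl; nra. Qed.

Lemma pow_le_pow_contract t m n : 0 <= t <= 1 -> (m <= n)%nat -> t ^ n <= t ^ m.
Proof.
  intros Ht Hmn. replace n with (m + (n - m))%nat by lia. rewrite pow_add.
  pose proof (pow_le_one t (n - m) Ht). pose proof (pow_le t m (proj1 Ht)). nra.
Qed.

Lemma rsum_geom t n : t <> 1 -> rsum (fun i => t ^ i) n = (1 - t ^ n) / (1 - t).
Proof. intros. induction n; simpl; [field | rewrite IHn; field]; lra. Qed.

Lemma rsum_geom_le t n : 0 <= t < 1 -> rsum (fun i => t ^ i) n <= 1 / (1 - t).
Proof.
  intros Ht. rewrite rsum_geom by lra. unfold Rdiv.
  apply Rmult_le_compat_r; [left; apply Rinv_0_lt_compat; lra |].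
  pose proof (pow_le t n (proj1 Ht)). lra.
Qed.

Lemma rsum_geom_cv c t : 0 <= t < 1 -> Un_cv (rsum (fun i => c * t ^ i)) (c / (1 - t)).
Proof.
  intros Ht e He.
  assert (Ht' : Rabs t < 1) by (rewrite Rabs_right; lra).
  assert (Hc : 0 < Rabs c + 1) by (pose proof (Rabs_pos c); lra).
  destruct (pow_lt_1_zero t Ht' (e * (1 - t) / (Rabs c + 1))) as [N HN].
  { apply Rdiv_lt_0_compat; nra. }
  exists N. intros n Hn. specialize (HN n Hn). unfold R_dist.
  rewrite rsum_scal, rsum_geom by lra.
  replace (c * ((1 - t ^ n) / (1 - t)) - c / (1 - t)) with (- (c * t ^ n / (1 - t))) by (field; lra).
  rewrite Rabs_Ropp. unfold Rdiv. rewrite !Rabs_mult, (Rabs_right (/ (1 - t)))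
    by (apply Rle_ge; left; apply Rinv_0_lt_compat; lra).
  apply Rmult_lt_reg_r with (1 - t); [lra |].
  rewrite Rmult_assoc, Rinv_l, Rmult_1_r by lra.
  apply Rle_lt_trans with ((Rabs c + 1) * Rabs (t ^ n)).
  - apply Rmult_le_compat_r; [apply Rabs_pos | lra].
  - apply Rmult_lt_reg_l with (/ (Rabs c + 1)); [apply Rinv_0_lt_compat; lra |].
    rewrite <- Rmult_assoc, Rinv_l, Rmult_1_l by lra.
    unfold Rdiv in HN. lra.
Qed.

Definition is_seriesC (u : nat -> C) (s : C) : Prop := cvC (csum u) s.

(* Junk unless the partial sums converge. *)
Definition SeriesC (u : nat -> C) : C := limC (csum u).

Definition geom_dominated (u : nat -> C) : Prop :=
  exists c t, 0 <= c /\ 0 <= t < 1 /\ forall j, Cmod (u j) <= c * t ^ j.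

Lemma is_seriesC_unique u s : is_seriesC u s -> SeriesC u = s.
Proof. apply limC_cvC. Qed.

Lemma SeriesC_ext u v : (forall j, u j = v j) -> SeriesC u = SeriesC v.
Proof. intros H. f_equal. apply functional_extensionality. exact H. Qed.

Lemma csum_dist_le u b n m : (forall j, Cmod (u j) <= b j) -> (n <= m)%nat ->
  Cmod (csum u m - csum u n)%C <= rsum b m - rsum b n.
Proof.
  intros Hd Hnm. replace m with (n + (m - n))%nat by lia. rewrite csum_split, rsum_split.
  replace (csum u n + csum (fun i => u (n + i)%nat) (m - n) - csum u n)%C
    with (csum (fun i => u (n + i)%nat) (m - n)) by ring.
  eapply Rle_trans; [apply Cmod_csum_le |].
  replace (rsum b n + rsum (fun i => b (n + i)%nat) (m - n) - rsum b n)
    with (rsum (fun i => b (n + i)%nat) (m - n)) by ring.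
  apply rsum_le. auto.
Qed.

Lemma is_seriesC_dominated u b beta :
  (forall j, Cmod (u j) <= b j) -> Un_cv (rsum b) beta ->
  is_seriesC u (SeriesC u) /\ forall J, Cmod (SeriesC u - csum u J)%C <= beta - rsum b J.
Proof.
  intros Hd Hb.
  assert (Hb0 : forall j, 0 <= b j) by (intros j; eapply Rle_trans; [apply Cmod_ge_0 | apply Hd]).
  assert (Hcv : is_seriesC u (SeriesC u)).
  { apply CauchyC_cvC. intros e He.
    destruct (CV_Cauchy _ (exist _ beta Hb) e He) as [N HN]. exists N. intros n m Hn Hm.
    specialize (HN n m Hn Hm). unfold R_dist in HN.
    destruct (Nat.le_ge_cases n m) as [H | H].
    - rewrite Cmod_minus_sym. eapply Rle_lt_trans; [apply csum_dist_le; eauto |].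
      pose proof (rsum_le_mono b n m Hb0 H). rewrite Rabs_minus_sym, Rabs_right in HN; lra.
    - eapply Rle_lt_trans; [apply csum_dist_le; eauto |].
      pose proof (rsum_le_mono b m n Hb0 H). rewrite Rabs_right in HN; lra. }
  split; [exact Hcv |]. intros J.
  apply (cvC_dist_le (csum u) _ _ _ J Hcv). intros n Hn.
  eapply Rle_trans; [apply csum_dist_le; eauto |].
  assert (rsum b n <= beta).
  { apply growing_ineq; [intros k; simpl; specialize (Hb0 k); lra | exact Hb]. }
  lra.
Qed.

Lemma SeriesC_tail_le u c t J : 0 <= t < 1 -> (forall j, Cmod (u j) <= c * t ^ j) ->
  Cmod (SeriesC u - csum u J)%C <= c / (1 - t) - rsum (fun i => c * t ^ i) J.
Proof. intros Ht H. apply (is_seriesC_dominated u _ _ H (rsum_geom_cv c t Ht)). Qed.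

Lemma SeriesC_Cmod_le u c t : 0 <= t < 1 -> (forall j, Cmod (u j) <= c * t ^ j) ->
  Cmod (SeriesC u) <= c / (1 - t).
Proof.
  intros Ht H. pose proof (SeriesC_tail_le u c t O Ht H) as T. simpl in T.
  replace (SeriesC u - 0)%C with (SeriesC u) in T by ring. lra.
Qed.

Lemma geom_dominated_is_seriesC u : geom_dominated u -> is_seriesC u (SeriesC u).
Proof.
  intros [c [t [_ [Ht H]]]]. apply (is_seriesC_dominated u _ _ H (rsum_geom_cv c t Ht)).
Qed.

Lemma geom_dominated_subseq u (phi : nat -> nat) :
  geom_dominated u -> (forall j, (j <= phi j)%nat) -> geom_dominated (fun j => u (phi j)).
Proof.
  intros [c [t [Hc [Ht H]]]] Hp. exists c, t. repeat split; auto; try lra. intros j.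
  eapply Rle_trans; [apply H |]. apply Rmult_le_compat_l; auto.
  apply pow_le_pow_contract; auto. lra.
Qed.

Lemma geom_dominated_plus u v :
  geom_dominated u -> geom_dominated v -> geom_dominated (fun j => u j + v j)%C.
Proof.
  intros [c [t [Hc [Ht H]]]] [d [r [Hd [Hr H']]]].
  exists (c + d), (Rmax t r). split; [lra | split; [split |]].
  - apply Rle_trans with t; [lra | apply Rmax_l].
  - apply Rmax_lub_lt; lra.
  - intros j. eapply Rle_trans; [apply Cmod_triangle |].
    assert (t ^ j <= Rmax t r ^ j) by (apply pow_incr; split; [lra | apply Rmax_l]).
    assert (r ^ j <= Rmax t r ^ j) by (apply pow_incr; split; [lra | apply Rmax_r]).
    specialize (H j). specialize (H' j).
    apply Rle_trans with (c * t ^ j + d * r ^ j); [lra |].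
    rewrite Rmult_plus_distr_r. apply Rplus_le_compat; apply Rmult_le_compat_l; auto.
Qed.

Lemma is_seriesC_plus u v s r :
  is_seriesC u s -> is_seriesC v r -> is_seriesC (fun j => u j + v j)%C (s + r)%C.
Proof.
  intros. eapply cvC_ext; [intros; symmetry; apply csum_plus |]. apply cvC_plus; auto.
Qed.

Lemma is_seriesC_scal c u s : is_seriesC u s -> is_seriesC (fun j => c * u j)%C (c * s)%C.
Proof.
  intros. eapply cvC_ext; [intros; symmetry; apply csum_scal |].
  apply cvC_mult; [apply cvC_const | auto].
Qed.

Lemma is_seriesC_first u s : is_seriesC (fun j => u (S j)) s -> is_seriesC u (u O + s)%C.
Proof.
  intros H. apply cvC_shift_inv with 1%nat.
  eapply cvC_ext; [| apply cvC_plus; [apply cvC_const | exact H]].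
  intros n. simpl. rewrite Nat.add_1_r, (csum_first u n). reflexivity.
Qed.

Lemma SeriesC_plus u v : geom_dominated u -> geom_dominated v ->
  SeriesC (fun j => u j + v j)%C = (SeriesC u + SeriesC v)%C.
Proof. intros. apply is_seriesC_unique, is_seriesC_plus; apply geom_dominated_is_seriesC; auto. Qed.

Lemma SeriesC_scal c u : geom_dominated u -> SeriesC (fun j => c * u j)%C = (c * SeriesC u)%C.
Proof. intros. apply is_seriesC_unique, is_seriesC_scal, geom_dominated_is_seriesC; auto. Qed.

Lemma SeriesC_first u : geom_dominated u -> SeriesC u = (u O + SeriesC (fun j => u (S j)))%C.
Proof.
  intros. apply is_seriesC_unique, is_seriesC_first, geom_dominated_is_seriesC.
  apply geom_dominated_subseq with (phi := S); auto.
Qed.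

Lemma SeriesC_even_odd u : geom_dominated u ->
  SeriesC u = (SeriesC (fun j => u (2 * j)%nat) + SeriesC (fun j => u (2 * j + 1)%nat))%C.
Proof.
  intros Hu. apply (cvC_unique (fun n => csum u (2 * n))).
  - apply cvC_subseq with (phi := fun n => (2 * n)%nat) (u := csum u); [intros; lia |].
    apply geom_dominated_is_seriesC; auto.
  - eapply cvC_ext; [intros; symmetry; apply csum_even_odd |].
    apply cvC_plus; apply geom_dominated_is_seriesC, geom_dominated_subseq; auto; intros; lia.
Qed.

Lemma SeriesC_finite u m : (forall i, (m <= i)%nat -> u i = RtoC 0) -> SeriesC u = csum u m.
Proof.
  intros H. apply is_seriesC_unique. apply cvC_ext_eventually with (fun _ => csum u m) m.
  - intros n Hn. symmetry. apply csum_zero_tail; auto.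
  - apply cvC_const.
Qed.

(** * Tannery's theorem and Fubini's theorem for double series *)

Lemma cvC_csum (a : nat -> nat -> C) (al : nat -> C) J :
  (forall j, cvC (fun n => a n j) (al j)) -> cvC (fun n => csum (a n) J) (csum al J).
Proof. intros H. induction J; simpl; [apply cvC_const | apply cvC_plus; auto]. Qed.

Lemma tannery (a : nat -> nat -> C) (al : nat -> C) (c t : R) :
  0 <= t < 1 ->
  (forall n j, Cmod (a n j) <= c * t ^ j) ->
  (forall j, cvC (fun n => a n j) (al j)) ->
  cvC (fun n => SeriesC (a n)) (SeriesC al).
Proof.
  intros Ht Hd Hl e He.
  assert (Hal : forall j, Cmod (al j) <= c * t ^ j).
  { intros j. replace (al j) with (al j - 0)%C by ring.
    apply (cvC_dist_le _ _ _ _ O (Hl j)). intros n _.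
    replace (a n j - 0)%C with (a n j) by ring. auto. }
  destruct (rsum_geom_cv c t Ht (e / 4) ltac:(lra)) as [J HJ].
  specialize (HJ J (le_n _)). unfold R_dist in HJ. rewrite Rabs_minus_sym in HJ.
  pose proof (Rle_abs (c / (1 - t) - rsum (fun i => c * t ^ i) J)) as Hr.
  destruct (cvC_csum a al J Hl (e / 4) ltac:(lra)) as [N HN].
  exists N. intros n Hn. specialize (HN n Hn).
  pose proof (SeriesC_tail_le (a n) c t J Ht (Hd n)) as T1.
  pose proof (SeriesC_tail_le al c t J Ht Hal) as T2.
  eapply Rle_lt_trans; [apply (Cmod_minus_triangle _ _ (csum (a n) J)) |].
  eapply Rle_lt_trans; [apply Rplus_le_compat_l, (Cmod_minus_triangle _ _ (csum al J)) |].
  rewrite (Cmod_minus_sym (csum al J)). lra.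
Qed.

Lemma SeriesC_csum (h : nat -> nat -> C) N : (forall b, geom_dominated (fun a => h a b)) ->
  SeriesC (fun a => csum (h a) N) = csum (fun b => SeriesC (fun a => h a b)) N.
Proof.
  intros H. induction N as [|N IH]; simpl.
  - rewrite (SeriesC_ext _ (fun _ => RtoC 0 * RtoC 0)%C) by (intros; simpl; ring).
    rewrite SeriesC_scal; [ring |]. exists 0, 0. repeat split; try lra. intros. rewrite Cmod_0. lra.
  - rewrite SeriesC_plus, IH; auto. clear IH. induction N as [|N IH]; simpl.
    + exists 0, 0. repeat split; try lra. intros. rewrite Cmod_0. lra.
    + apply geom_dominated_plus; auto.
Qed.

Lemma SeriesC_fubini (h : nat -> nat -> C) c t : 0 <= c -> 0 <= t < 1 ->
  (forall a b, Cmod (h a b) <= c * t ^ a * t ^ b) ->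
  SeriesC (fun a => SeriesC (h a)) = SeriesC (fun b => SeriesC (fun a => h a b)).
Proof.
  intros Hc Ht Hd.
  assert (Hb : forall b, geom_dominated (fun a => h a b)).
  { intros b. exists (c * t ^ b), t. split; [apply Rmult_le_pos; auto; apply pow_le; lra |].
    split; auto. intros a. specialize (Hd a b). lra. }
  assert (Hpartial : forall N a, Cmod (csum (h a) N) <= c / (1 - t) * t ^ a).
  { intros N a. eapply Rle_trans; [apply Cmod_csum_le |].
    eapply Rle_trans; [apply rsum_le with (g := fun b => c * t ^ a * t ^ b); intros; apply Hd |].
    rewrite rsum_scal. pose proof (rsum_geom_le t N Ht).
    assert (0 <= c * t ^ a) by (apply Rmult_le_pos; auto; apply pow_le; lra).
    replace (c / (1 - t) * t ^ a) with (c * t ^ a * (1 / (1 - t))) by (field; lra).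
    apply Rmult_le_compat_l; auto. }
  assert (T : cvC (fun N => SeriesC (fun a => csum (h a) N)) (SeriesC (fun a => SeriesC (h a)))).
  { apply tannery with (c := c / (1 - t)) (t := t); auto.
    intros a. apply geom_dominated_is_seriesC.
    exists (c * t ^ a), t. split; [apply Rmult_le_pos; auto; apply pow_le; lra | auto]. }
  symmetry. apply is_seriesC_unique. eapply cvC_ext; [| exact T].
  intros N. apply SeriesC_csum. auto.
Qed.

Definition ZSeriesC (f : Z -> C) : C :=
  (SeriesC (fun j => f (Z.of_nat j)) + SeriesC (fun j => f (- Z.of_nat j - 1)%Z))%C.

Definition Z_geom_dominated (f : Z -> C) : Prop :=
  exists c t, 0 <= c /\ 0 < t < 1 /\ forall z, Cmod (f z) <= c * t ^ Z.abs_nat z.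

Lemma ZSeriesC_ext f g : (forall z, f z = g z) -> ZSeriesC f = ZSeriesC g.
Proof. intros H. unfold ZSeriesC. f_equal; apply SeriesC_ext; auto. Qed.

Lemma Z_geom_dominated_nat f (phi : nat -> Z) :
  Z_geom_dominated f -> (forall j, (j <= Z.abs_nat (phi j))%nat) ->
  geom_dominated (fun j => f (phi j)).
Proof.
  intros [c [t [Hc [Ht H]]]] Hp. exists c, t. repeat split; auto; try lra. intros j.
  eapply Rle_trans; [apply H |]. apply Rmult_le_compat_l; auto.
  apply pow_le_pow_contract; auto. lra.
Qed.

Ltac abs_nat_le :=
  intros; apply Nat2Z.inj_le; rewrite ?Nat2Z.inj_add, ?Nat2Z.inj_mul, ?Zabs2Nat.id_abs; lia.

Lemma Z_geom_dominated_pos f : Z_geom_dominated f -> geom_dominated (fun j => f (Z.of_nat j)).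
Proof. intros H. apply Z_geom_dominated_nat; auto. abs_nat_le. Qed.

Lemma Z_geom_dominated_neg f : Z_geom_dominated f -> geom_dominated (fun j => f (- Z.of_nat j - 1)%Z).
Proof. intros H. apply Z_geom_dominated_nat; auto. abs_nat_le. Qed.

Lemma Z_geom_dominated_scal c f : Z_geom_dominated f -> Z_geom_dominated (fun z => c * f z)%C.
Proof.
  intros [d [t [Hd [Ht H]]]]. exists (Cmod c * d), t.
  split; [apply Rmult_le_pos; auto; apply Cmod_ge_0 |].
  split; auto. intros z. rewrite Cmod_mult, Rmult_assoc. apply Rmult_le_compat_l; auto. apply Cmod_ge_0.
Qed.

Lemma Z_geom_dominated_shift f k : Z_geom_dominated f -> Z_geom_dominated (fun z => f (z + k)%Z).
Proof.
  intros [c [t [Hc [Ht H]]]]. exists (c / t ^ Z.abs_nat k), t.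
  assert (Tp : forall n, 0 < t ^ n) by (intros; apply pow_lt; lra).
  split; [apply Rdiv_le_0_compat; auto |]. split; auto. intros z.
  eapply Rle_trans; [apply H |].
  replace (c / t ^ Z.abs_nat k * t ^ Z.abs_nat z) with (c * (t ^ Z.abs_nat z / t ^ Z.abs_nat k))
    by (field; apply Rgt_not_eq, Tp).
  apply Rmult_le_compat_l; auto.
  apply Rmult_le_reg_r with (t ^ Z.abs_nat k); auto.
  unfold Rdiv. rewrite Rmult_assoc, Rinv_l, Rmult_1_r by (apply Rgt_not_eq, Tp).
  rewrite <- pow_add. apply pow_le_pow_contract; [lra | abs_nat_le].
Qed.

Lemma Z_geom_dominated_pow (f : Z -> C) (k : Z -> nat) q K : Cmod q < 1 ->
  (forall z, Cmod (f z) <= Cmod q ^ k z) -> (forall z, (Z.abs_nat z <= k z + K)%nat) ->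
  Z_geom_dominated f.
Proof.
  intros Hq Hf Hk. set (t := Rmax (Cmod q) (1 / 2)).
  assert (Ht : 0 < t < 1).
  { unfold t. split; [apply Rlt_le_trans with (1 / 2); [lra | apply Rmax_r] | apply Rmax_lub_lt; lra]. }
  assert (Tp : forall n, 0 < t ^ n) by (intros; apply pow_lt; lra).
  exists (1 / t ^ K), t. split; [left; apply Rdiv_lt_0_compat; auto; lra |]. split; auto.
  intros z. eapply Rle_trans; [apply Hf |].
  eapply Rle_trans; [apply pow_incr; split; [apply Cmod_ge_0 | apply (Rmax_l _ (1 / 2))] |].
  fold t. apply Rmult_le_reg_l with (t ^ K); auto.
  replace (t ^ K * (1 / t ^ K * t ^ Z.abs_nat z)) with (t ^ Z.abs_nat z)
    by (field; apply Rgt_not_eq, Tp).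
  rewrite <- pow_add. apply pow_le_pow_contract; [lra |]. specialize (Hk z). lia.
Qed.

Lemma ZSeriesC_scal c f : Z_geom_dominated f -> ZSeriesC (fun z => c * f z)%C = (c * ZSeriesC f)%C.
Proof.
  intros Hf. unfold ZSeriesC.
  rewrite (SeriesC_scal c (fun j => f (Z.of_nat j))) by (apply Z_geom_dominated_pos; auto).
  rewrite (SeriesC_scal c (fun j => f (- Z.of_nat j - 1)%Z)) by (apply Z_geom_dominated_neg; auto).
  ring.
Qed.

Lemma ZSeriesC_scal_r c f : Z_geom_dominated f -> ZSeriesC (fun z => f z * c)%C = (ZSeriesC f * c)%C.
Proof.
  intros Hf. rewrite Cmult_comm, <- ZSeriesC_scal by auto. apply ZSeriesC_ext. intros; ring.
Qed.

Lemma ZSeriesC_shift_1 f : Z_geom_dominated f -> ZSeriesC (fun z => f (z + 1)%Z) = ZSeriesC f.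
Proof.
  intros Hf. unfold ZSeriesC.
  rewrite (SeriesC_first (fun j => f (Z.of_nat j))) by (apply Z_geom_dominated_pos; auto).
  rewrite (SeriesC_first (fun j => f (- Z.of_nat j - 1 + 1)%Z))
    by (apply Z_geom_dominated_nat; auto; abs_nat_le).
  rewrite (SeriesC_ext (fun j => f (Z.of_nat (S j))) (fun j => f (Z.of_nat j + 1)%Z))
    by (intros; f_equal; lia).
  rewrite (SeriesC_ext (fun j => f (- Z.of_nat (S j) - 1 + 1)%Z) (fun j => f (- Z.of_nat j - 1)%Z))
    by (intros; f_equal; lia).
  replace (- Z.of_nat 0 - 1 + 1)%Z with (Z.of_nat 0) by lia. ring.
Qed.

Lemma ZSeriesC_shift f k : Z_geom_dominated f -> ZSeriesC (fun z => f (z + k)%Z) = ZSeriesC f.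
Proof.
  intros Hf.
  assert (Hnat : forall g n, Z_geom_dominated g ->
                 ZSeriesC (fun z => g (z + Z.of_nat n)%Z) = ZSeriesC g).
  { intros g n Hg. induction n as [|n IH].
    - apply ZSeriesC_ext. intros. f_equal. lia.
    - rewrite <- IH, <- (ZSeriesC_shift_1 (fun z => g (z + Z.of_nat n)%Z))
        by (apply Z_geom_dominated_shift; auto).
      apply ZSeriesC_ext. intros. f_equal. lia. }
  destruct (Z_le_gt_dec 0 k).
  - replace k with (Z.of_nat (Z.to_nat k)) by lia. apply Hnat; auto.
  - rewrite <- (Hnat (fun z => f (z + k)%Z) (Z.to_nat (- k))) by (apply Z_geom_dominated_shift; auto).
    apply ZSeriesC_ext. intros. f_equal. lia.
Qed.

Lemma ZSeriesC_parity f : Z_geom_dominated f ->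
  ZSeriesC f = (ZSeriesC (fun z => f (2 * z)%Z) + ZSeriesC (fun z => f (2 * z + 1)%Z))%C.
Proof.
  intros Hf. unfold ZSeriesC.
  rewrite (SeriesC_even_odd (fun j => f (Z.of_nat j))) by (apply Z_geom_dominated_pos; auto).
  rewrite (SeriesC_even_odd (fun j => f (- Z.of_nat j - 1)%Z)) by (apply Z_geom_dominated_neg; auto).
  rewrite (SeriesC_ext (fun j => f (Z.of_nat (2 * j))) (fun j => f (2 * Z.of_nat j)%Z))
    by (intros; f_equal; lia).
  rewrite (SeriesC_ext (fun j => f (Z.of_nat (2 * j + 1))) (fun j => f (2 * Z.of_nat j + 1)%Z))
    by (intros; f_equal; lia).
  rewrite (SeriesC_ext (fun j => f (- Z.of_nat (2 * j) - 1)%Z)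
                       (fun j => f (2 * (- Z.of_nat j - 1) + 1)%Z))
    by (intros; f_equal; lia).
  rewrite (SeriesC_ext (fun j => f (- Z.of_nat (2 * j + 1) - 1)%Z)
                       (fun j => f (2 * (- Z.of_nat j - 1))%Z))
    by (intros; f_equal; lia).
  ring.
Qed.

Lemma ZSeriesC_Cmod_le f c t : 0 < t < 1 -> (forall z, Cmod (f z) <= c * t ^ Z.abs_nat z) ->
  Cmod (ZSeriesC f) <= 2 * c / (1 - t).
Proof.
  intros Ht H. unfold ZSeriesC. eapply Rle_trans; [apply Cmod_triangle |].
  assert (Cmod (SeriesC (fun j => f (Z.of_nat j))) <= c / (1 - t)).
  { apply SeriesC_Cmod_le; [lra |]. intros j. rewrite <- (Zabs2Nat.id j) at 2. auto. }
  assert (Cmod (SeriesC (fun j => f (- Z.of_nat j - 1)%Z)) <= c / (1 - t)).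
  { apply SeriesC_Cmod_le; [lra |]. intros j. eapply Rle_trans; [apply H |].
    assert (0 <= c) by (eapply Rle_trans; [apply (Cmod_ge_0 (f 0%Z)) |];
                        pose proof (H 0%Z); simpl in *; lra).
    apply Rmult_le_compat_l; auto. apply pow_le_pow_contract; [lra | abs_nat_le]. }
  replace (2 * c / (1 - t)) with (c / (1 - t) + c / (1 - t)) by (field; lra). lra.
Qed.

Definition Z_of_zigzag (j : nat) : Z :=
  if Nat.even j then Z.of_nat (Nat.div2 j) else (- Z.of_nat (Nat.div2 j) - 1)%Z.

Lemma Z_of_zigzag_even j : Z_of_zigzag (2 * j) = Z.of_nat j.
Proof. unfold Z_of_zigzag. rewrite Nat.even_even, Nat.div2_double. reflexivity. Qed.

Lemma Z_of_zigzag_odd j : Z_of_zigzag (2 * j + 1) = (- Z.of_nat j - 1)%Z.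
Proof.
  unfold Z_of_zigzag. rewrite Nat.even_odd, Nat.add_1_r, Nat.div2_succ_double. reflexivity.
Qed.

Lemma pow_Z_of_zigzag_le t j : 0 < t < 1 -> t ^ Z.abs_nat (Z_of_zigzag j) <= sqrt t ^ j.
Proof.
  intros Ht. assert (Hs : 0 <= sqrt t <= 1).
  { split; [apply sqrt_pos |]. rewrite <- sqrt_1. apply sqrt_le_1_alt. lra. }
  assert (E : t = sqrt t ^ 2) by (simpl; rewrite Rmult_1_r, sqrt_sqrt; lra).
  rewrite E at 1. rewrite <- pow_mult.
  apply pow_le_pow_contract; auto.
  destruct (Nat.Even_or_Odd j) as [[k ->] | [k ->]].
  - rewrite Z_of_zigzag_even. abs_nat_le.
  - rewrite Z_of_zigzag_odd. abs_nat_le.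
Qed.

Lemma sqrt_lt_1_of_lt_1 t : 0 <= t < 1 -> sqrt t < 1.
Proof. intros Ht. rewrite <- sqrt_1. apply sqrt_lt_1_alt. lra. Qed.

Lemma Z_geom_dominated_zigzag f :
  Z_geom_dominated f -> geom_dominated (fun j => f (Z_of_zigzag j)).
Proof.
  intros [c [t [Hc [Ht H]]]]. exists c, (sqrt t).
  split; [auto | split; [split; [apply sqrt_pos | apply sqrt_lt_1_of_lt_1; lra] |]].
  intros j. eapply Rle_trans; [apply H |].
  apply Rmult_le_compat_l; auto. apply pow_Z_of_zigzag_le; auto.
Qed.

Lemma ZSeriesC_zigzag f : Z_geom_dominated f -> ZSeriesC f = SeriesC (fun j => f (Z_of_zigzag j)).
Proof.
  intros Hf. rewrite SeriesC_even_odd by (apply Z_geom_dominated_zigzag; auto).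
  unfold ZSeriesC. f_equal; apply SeriesC_ext; intros j.
  - rewrite Z_of_zigzag_even. reflexivity.
  - rewrite Z_of_zigzag_odd. reflexivity.
Qed.

Definition Z_double_dominated (g : Z -> Z -> C) (c t : R) : Prop :=
  forall a b, Cmod (g a b) <= c * t ^ Z.abs_nat a * t ^ Z.abs_nat b.

Section DoubleSeries.

Variables (g : Z -> Z -> C) (c t : R).
Hypotheses (Hc : 0 <= c) (Ht : 0 < t < 1) (Hg : Z_double_dominated g c t).

Lemma Z_double_dominated_swap : Z_double_dominated (fun a b => g b a) c t.
Proof. intros a b. rewrite (Rmult_assoc c), (Rmult_comm (t ^ _)), <- Rmult_assoc. apply Hg. Qed.

Lemma Z_double_dominated_row a : Z_geom_dominated (g a).
Proof.
  exists (c * t ^ Z.abs_nat a), t. split; [apply Rmult_le_pos; auto; apply pow_le; lra |].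
  split; auto.
Qed.

Lemma Z_geom_dominated_ZSeriesC_col : Z_geom_dominated (fun b => ZSeriesC (fun a => g a b)).
Proof.
  exists (2 * c / (1 - t)), t. split; [apply Rdiv_le_0_compat; lra |]. split; auto.
  intros b. replace (2 * c / (1 - t) * t ^ Z.abs_nat b) with (2 * (c * t ^ Z.abs_nat b) / (1 - t))
    by (field; lra).
  apply ZSeriesC_Cmod_le; auto. intros a. apply Z_double_dominated_swap.
Qed.

Lemma ZSeriesC_double_zigzag :
  ZSeriesC (fun a => ZSeriesC (g a)) =
  SeriesC (fun i => SeriesC (fun j => g (Z_of_zigzag i) (Z_of_zigzag j))).
Proof.
  assert (Hs : 0 <= sqrt t < 1) by (split; [apply sqrt_pos | apply sqrt_lt_1_of_lt_1; lra]).
  rewrite (ZSeriesC_ext _ (fun a => SeriesC (fun j => g a (Z_of_zigzag j))))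
    by (intros a; apply ZSeriesC_zigzag, Z_double_dominated_row).
  apply ZSeriesC_zigzag.
  exists (c / (1 - sqrt t)), t. split; [apply Rdiv_le_0_compat; lra |]. split; auto.
  intros a. replace (c / (1 - sqrt t) * t ^ Z.abs_nat a) with (c * t ^ Z.abs_nat a / (1 - sqrt t))
    by (field; lra).
  apply SeriesC_Cmod_le; auto. intros j. eapply Rle_trans; [apply Hg |].
  apply Rmult_le_compat_l; [apply Rmult_le_pos; auto; apply pow_le; lra |].
  apply pow_Z_of_zigzag_le; auto.
Qed.

End DoubleSeries.

Lemma ZSeriesC_fubini (g : Z -> Z -> C) c t : 0 <= c -> 0 < t < 1 -> Z_double_dominated g c t ->
  ZSeriesC (fun a => ZSeriesC (g a)) = ZSeriesC (fun b => ZSeriesC (fun a => g a b)).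
Proof.
  intros Hc Ht Hg.
  rewrite (ZSeriesC_double_zigzag g c t), (ZSeriesC_double_zigzag (fun a b => g b a) c t)
    by auto using Z_double_dominated_swap.
  apply SeriesC_fubini with c (sqrt t); auto.
  - split; [apply sqrt_pos | apply sqrt_lt_1_of_lt_1; lra].
  - intros a b. eapply Rle_trans; [apply Hg |]. rewrite !Rmult_assoc.
    apply Rmult_le_compat_l; auto.
    apply Rmult_le_compat; try (apply pow_le; lra); apply pow_Z_of_zigzag_le; auto.
Qed.

(** * Theta functions and their duplication formulas *)

(* [theta q true] and [theta q false] are Jacobi's [theta_3] and [theta_4] in
   the nome [q]. *)
Definition sign_pow (b : bool) (z : Z) : C :=
  if b then RtoC 1 else if Z.even z then RtoC 1 else RtoC (-1).

Definition theta (q : C) (b : bool) : C :=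
  ZSeriesC (fun z => sign_pow b z * q ^ Z.to_nat (z * z))%C.

Definition theta_coset (q : C) (r : Z) : C :=
  ZSeriesC (fun z => q ^ Z.to_nat ((2 * z + r) * (2 * z + r)))%C.

Lemma Cmod_sign_pow b z : Cmod (sign_pow b z) = 1.
Proof.
  unfold sign_pow. destruct b; [apply Cmod_1 |]. destruct (Z.even z); [apply Cmod_1 |].
  rewrite Cmod_R, Rabs_left; lra.
Qed.

Lemma sign_pow_add b x y : sign_pow b (x + y) = (sign_pow b x * sign_pow b y)%C.
Proof.
  unfold sign_pow. destruct b; [ring |]. rewrite Z.even_add.
  destruct (Z.even x), (Z.even y); simpl; apply injective_projections; simpl; ring.
Qed.

Lemma sign_pow_double b d : sign_pow b (2 * d) = RtoC 1.
Proof. unfold sign_pow. destruct b; auto. rewrite Z.even_mul. reflexivity. Qed.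

Lemma sign_pow_opp b z : sign_pow b (- z) = sign_pow b z.
Proof. unfold sign_pow. rewrite Z.even_opp. reflexivity. Qed.

Lemma sign_pow_nat b j : sign_pow b (Z.of_nat j) = (sign_pow b 1 ^ j)%C.
Proof.
  induction j as [|j IH]; [destruct b; reflexivity |].
  rewrite Nat2Z.inj_succ, <- Z.add_1_r, sign_pow_add, IH, Cpow_S. ring.
Qed.

Lemma Z_abs_le_square z : (Z.abs z <= z * z)%Z.
Proof. nia. Qed.

Lemma Z_geom_dominated_theta q b : Cmod q < 1 ->
  Z_geom_dominated (fun z => sign_pow b z * q ^ Z.to_nat (z * z))%C.
Proof.
  intros Hq. apply Z_geom_dominated_pow with (k := fun z => Z.to_nat (z * z)) (q := q) (K := O); auto.
  - intros. rewrite Cmod_mult, Cmod_sign_pow, Cmod_pow. lra.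
  - intros z. pose proof (Z_abs_le_square z). abs_nat_le.
Qed.

Lemma Z_geom_dominated_quadratic q (a r : Z) : Cmod q < 1 -> (a <> 0)%Z ->
  Z_geom_dominated (fun z => q ^ Z.to_nat ((a * z + r) * (a * z + r)))%C.
Proof.
  intros Hq Ha.
  apply Z_geom_dominated_pow with (k := fun z => Z.to_nat ((a * z + r) * (a * z + r))) (q := q)
    (K := Z.abs_nat r); auto.
  - intros. rewrite Cmod_pow. lra.
  - intros z. pose proof (Z_abs_le_square (a * z + r)).
    assert (Z.abs z <= Z.abs (a * z))%Z by (rewrite Z.abs_mul; nia). abs_nat_le.
Qed.

Lemma theta_parity q b : Cmod q < 1 ->
  theta q b = (theta_coset q 0 + sign_pow b 1 * theta_coset q 1)%C.
Proof.
  intros Hq. unfold theta. rewrite ZSeriesC_parity by (apply Z_geom_dominated_theta; auto).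
  unfold theta_coset. rewrite <- ZSeriesC_scal by (apply Z_geom_dominated_quadratic; auto; lia).
  f_equal; apply ZSeriesC_ext; intros z.
  - rewrite sign_pow_double, Z.add_0_r. ring.
  - rewrite sign_pow_add, sign_pow_double. ring.
Qed.

(* Expanding [theta (q^2) b ^ 2] and substituting [c = a + b'] in the double sum
   gives this kernel, because [2 a^2 + 2 (c - a)^2 = c^2 + (2 a - c)^2]. *)
Definition theta_square_kernel (q : C) (b : bool) (a c : Z) : C :=
  (sign_pow b c * q ^ (Z.to_nat (c * c) + Z.to_nat ((2 * a - c) * (2 * a - c))))%C.

Lemma theta_square_double_sum q b : Cmod q < 1 ->
  (theta (q * q) b * theta (q * q) b)%C = ZSeriesC (fun a => ZSeriesC (theta_square_kernel q b a)).
Proof.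
  intros Hq.
  assert (Hqq : Cmod (q * q)%C < 1) by (rewrite Cmod_mult; pose proof (Cmod_ge_0 q); nra).
  set (F := fun z => (sign_pow b z * (q * q) ^ Z.to_nat (z * z))%C).
  assert (HF : Z_geom_dominated F) by (apply Z_geom_dominated_theta; auto).
  unfold theta. fold F. rewrite <- ZSeriesC_scal_r by auto. apply ZSeriesC_ext. intros a.
  rewrite <- ZSeriesC_scal by auto.
  rewrite <- (ZSeriesC_shift (fun b' => F a * F b')%C (- a)) by (apply Z_geom_dominated_scal; auto).
  apply ZSeriesC_ext. intros c. unfold F, theta_square_kernel.
  set (A := Z.to_nat (a * a)). set (B := Z.to_nat ((c + - a) * (c + - a))).
  transitivity (sign_pow b (a + (c + - a)) * q ^ (A + A + (B + B)))%C.
  { rewrite (sign_pow_add b a), !Cpow_mult_l, !Cpow_add_r. ring. }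
  replace (a + (c + - a))%Z with c by ring. do 2 f_equal.
  apply Nat2Z.inj. unfold A, B. rewrite !Nat2Z.inj_add, !Z2Nat.id by apply Z.square_nonneg. ring.
Qed.

Lemma theta_square_kernel_dominated q b : Cmod q < 1 ->
  Z_double_dominated (theta_square_kernel q b) 1 (sqrt (Rmax (Cmod q) (1 / 2))).
Proof.
  intros Hq a c. unfold theta_square_kernel.
  rewrite Cmod_mult, Cmod_sign_pow, Cmod_pow, !Rmult_1_l.
  set (r := Rmax (Cmod q) (1 / 2)).
  assert (Hr : 1 / 2 <= r < 1) by (unfold r; split; [apply Rmax_r | apply Rmax_lub_lt; lra]).
  assert (Ht2 : sqrt r ^ 2 = r) by (simpl; rewrite Rmult_1_r; apply sqrt_sqrt; lra).
  eapply Rle_trans; [apply pow_incr; split; [apply Cmod_ge_0 | apply (Rmax_l _ (1 / 2))] |].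
  fold r. rewrite <- Ht2 at 1. rewrite <- pow_mult, <- pow_add.
  apply pow_le_pow_contract; [split; [apply sqrt_pos | left; apply sqrt_lt_1_of_lt_1; lra] |].
  pose proof (Z_abs_le_square c). pose proof (Z_abs_le_square (2 * a - c)).
  apply Nat2Z.inj_le.
  rewrite !Nat2Z.inj_add, Nat2Z.inj_mul, Nat2Z.inj_add, !Z2Nat.id, !Zabs2Nat.id_abs
    by apply Z.square_nonneg.
  lia.
Qed.

Lemma ZSeriesC_theta_square_kernel_col q b c d r : Cmod q < 1 -> c = (2 * d + r)%Z ->
  ZSeriesC (fun a => theta_square_kernel q b a c) =
  (sign_pow b r * theta_coset q r * q ^ Z.to_nat ((2 * d + r) * (2 * d + r)))%C.
Proof.
  intros Hq ->. unfold theta_square_kernel. rewrite sign_pow_add, sign_pow_double.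
  set (f := fun z => (q ^ Z.to_nat ((2 * z + r) * (2 * z + r)))%C).
  assert (Hf : Z_geom_dominated f) by (apply Z_geom_dominated_quadratic; auto; lia).
  rewrite (ZSeriesC_ext _ (fun a => (sign_pow b r * q ^ Z.to_nat ((2 * d + r) * (2 * d + r)))
                                    * f (a + (- d - r))%Z)%C).
  2: { intros a. unfold f. rewrite Cpow_add_r.
       replace (2 * a - (2 * d + r))%Z with (2 * (a + (- d - r)) + r)%Z by ring. ring. }
  rewrite ZSeriesC_scal by (apply (Z_geom_dominated_shift f); auto).
  rewrite (ZSeriesC_shift f) by auto. unfold theta_coset. fold f. ring.
Qed.

Lemma theta_square q b : Cmod q < 1 ->
  (theta (q * q) b * theta (q * q) b)%C =
  (theta_coset q 0 * theta_coset q 0 + sign_pow b 1 * theta_coset q 1 * theta_coset q 1)%C.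
Proof.
  intros Hq. set (t := sqrt (Rmax (Cmod q) (1 / 2))).
  assert (Ht : 0 < t < 1).
  { split; [apply sqrt_lt_R0; apply Rlt_le_trans with (1 / 2); [lra | apply Rmax_r] |].
    apply sqrt_lt_1_of_lt_1. split; [apply Rle_trans with (1 / 2); [lra | apply Rmax_r] |].
    apply Rmax_lub_lt; lra. }
  pose proof (theta_square_kernel_dominated q b Hq) as Hk. fold t in Hk.
  rewrite theta_square_double_sum, (ZSeriesC_fubini _ 1 t) by (auto; lra).
  rewrite ZSeriesC_parity by (apply (Z_geom_dominated_ZSeriesC_col _ 1 t); auto; lra).
  rewrite (ZSeriesC_ext (fun d => ZSeriesC (fun a => theta_square_kernel q b a (2 * d)%Z))
                       (fun d => sign_pow b 0 * theta_coset q 0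
                                 * q ^ Z.to_nat ((2 * d + 0) * (2 * d + 0))))%C
    by (intros d; apply ZSeriesC_theta_square_kernel_col; auto; ring).
  rewrite (ZSeriesC_ext (fun d => ZSeriesC (fun a => theta_square_kernel q b a (2 * d + 1)%Z))
                       (fun d => sign_pow b 1 * theta_coset q 1
                                 * q ^ Z.to_nat ((2 * d + 1) * (2 * d + 1))))%C
    by (intros d; apply ZSeriesC_theta_square_kernel_col; auto).
  rewrite !ZSeriesC_scal by (apply Z_geom_dominated_quadratic; auto; lia).
  fold (theta_coset q 0) (theta_coset q 1).
  replace (sign_pow b 0) with (RtoC 1) by (destruct b; reflexivity). ring.
Qed.

Theorem theta3_sq_plus_theta4_sq q : Cmod q < 1 ->
  (theta q true * theta q true + theta q false * theta q false)%C =
  (2 * (theta (q * q) true * theta (q * q) true))%C.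
Proof.
  intros Hq. rewrite theta_square, !theta_parity by auto. cbn [sign_pow Z.even].
  apply injective_projections; simpl; ring.
Qed.

Theorem theta3_mul_theta4 q : Cmod q < 1 ->
  (theta q true * theta q false)%C = (theta (q * q) false * theta (q * q) false)%C.
Proof.
  intros Hq. rewrite theta_square, !theta_parity by auto. cbn [sign_pow Z.even].
  apply injective_projections; simpl; ring.
Qed.

(** * Gaussian binomial coefficients and the finite triple product *)

Fixpoint qbinom (Q : C) (N i : nat) : C :=
  match N, i with
  | O, O => RtoC 1
  | O, S _ => RtoC 0
  | S N', O => RtoC 1
  | S N', S i' => (qbinom Q N' i' + Q ^ (S i') * qbinom Q N' (S i'))%C
  end.

Fixpoint triangular (n : nat) : nat :=
  match n with O => O | S k => (triangular k + k)%nat end.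

Definition qpoch (Q : C) (m : nat) : C := cprod (fun k => 1 - Q ^ (S k))%C m.

Lemma qbinom_0_r Q N : qbinom Q N 0 = RtoC 1.
Proof. destruct N; reflexivity. Qed.

Lemma qbinom_gt Q N i : (N < i)%nat -> qbinom Q N i = RtoC 0.
Proof.
  revert i. induction N as [|N IH]; intros i Hi; destruct i; try lia; simpl; [reflexivity |].
  rewrite !IH by lia. ring.
Qed.

Lemma triangular_double m : (2 * triangular m + m = m * m)%nat.
Proof. induction m; simpl; lia. Qed.

Theorem qbinomial_theorem Q N x :
  cprod (fun i => 1 + x * Q ^ i)%C N =
  csum (fun i => qbinom Q N i * Q ^ triangular i * x ^ i)%C (S N).
Proof.
  revert x. induction N as [|N IH]; intros x; [simpl; ring |].
  rewrite cprod_first. simpl (1 + x * Q ^ 0)%C.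
  rewrite (cprod_ext _ (fun i => 1 + (x * Q) * Q ^ i)%C) by (intros; simpl; ring).
  rewrite IH.
  set (h := fun i => (qbinom Q N i * Q ^ triangular i * (x * Q) ^ i)%C).
  change (csum (fun i => qbinom Q N i * Q ^ triangular i * (x * Q) ^ i)%C (S N)) with (csum h (S N)).
  rewrite (csum_first (fun i => qbinom Q (S N) i * Q ^ triangular i * x ^ i)%C (S N)).
  rewrite (csum_ext (fun i => qbinom Q (S N) (S i) * Q ^ triangular (S i) * x ^ S i)%C
                    (fun i => h (S i) + x * h i)%C).
  2: { intros i _. unfold h. simpl qbinom. simpl triangular.
       rewrite !Cpow_mult_l, !Cpow_add_r. simpl. ring. }
  rewrite csum_plus, csum_scal.
  assert (Hlast : h (S N) = RtoC 0) by (unfold h; rewrite qbinom_gt by lia; ring).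
  assert (Htail : csum (fun i => h (S i)) (S N) = (csum h (S N) - h O)%C).
  { pose proof (csum_first h (S N)) as E.
    change (csum h (S (S N))) with (csum h (S N) + h (S N))%C in E.
    rewrite Hlast, Cplus_0_r in E. rewrite E. ring. }
  rewrite Htail. unfold h. rewrite !qbinom_0_r. simpl. ring.
Qed.

Lemma qbinom_qpoch Q N i : (i <= N)%nat ->
  (qbinom Q N i * qpoch Q i * qpoch Q (N - i) = qpoch Q N)%C.
Proof.
  revert i. induction N as [|N IH]; intros i Hi.
  { destruct i; [| lia]. unfold qpoch. simpl. ring. }
  destruct i as [|i].
  { rewrite qbinom_0_r, Nat.sub_0_r. unfold qpoch at 1. simpl. ring. }
  simpl qbinom. replace (S N - S i)%nat with (N - i)%nat by lia.
  destruct (Nat.eq_dec i N) as [-> | Hne].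
  - pose proof (IH N (le_n _)) as I.
    rewrite (qbinom_gt Q N (S N)) by lia. rewrite Nat.sub_diag in *.
    change (qpoch Q (S N)) with (qpoch Q N * (1 - Q ^ S N))%C.
    rewrite <- I at 2. ring.
  - pose proof (IH i ltac:(lia)) as I1. pose proof (IH (S i) ltac:(lia)) as I2.
    set (m := (N - S i)%nat) in *.
    assert (Em : (N - i)%nat = S m) by (unfold m; lia). rewrite Em in *.
    change (qpoch Q (S ?k)) with (qpoch Q k * (1 - Q ^ S k))%C in *.
    transitivity ((qbinom Q N i * qpoch Q i * (qpoch Q m * (1 - Q ^ S m))) * (1 - Q ^ S i)
      + Q ^ S i * (qbinom Q N (S i) * (qpoch Q i * (1 - Q ^ S i)) * qpoch Q m) * (1 - Q ^ S m))%C.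
    { rewrite !Cpow_S. ring. }
    rewrite I1, I2, <- Em.
    replace (qpoch Q N * (1 - Q ^ S i) + Q ^ S i * qpoch Q N * (1 - Q ^ (N - i)))%C
      with (qpoch Q N * (1 - Q ^ (S i + (N - i))))%C by (rewrite Cpow_add_r; ring).
    replace (S i + (N - i))%nat with (S N) by lia. reflexivity.
Qed.

Lemma Cpow_mul_inv_pow q a : q <> RtoC 0 -> (q ^ a * (/ q) ^ a)%C = RtoC 1.
Proof. intros. rewrite <- Cpow_mult_l, Cinv_r by auto. apply Cpow_1_l. Qed.

Lemma Cpow_mul_inv_pow_sub q A B D : q <> RtoC 0 -> A = (B + D)%nat ->
  (q ^ A * (/ q) ^ B)%C = (q ^ D)%C.
Proof.
  intros Hq ->. rewrite Cpow_add_r, (Cmult_comm (q ^ B)), <- Cmult_assoc, Cpow_mul_inv_pow by auto.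
  ring.
Qed.

Lemma Cpow_mul_inv_pow_add q A D : q <> RtoC 0 -> (q ^ A * (/ q) ^ (A + D))%C = ((/ q) ^ D)%C.
Proof. intros Hq. rewrite Cpow_add_r, Cmult_assoc, Cpow_mul_inv_pow by auto. ring. Qed.

Lemma Cpow_involutive_even (s : C) k : (s * s = 1)%C -> (s ^ (2 * k) = 1)%C.
Proof. intros H. rewrite Cpow_mult_r. simpl. rewrite Cmult_1_r, H. apply Cpow_1_l. Qed.

Lemma Cpow_involutive_even_add (s : C) k m : (s * s = 1)%C -> (s ^ (2 * k + m) = s ^ m)%C.
Proof. intros H. rewrite Cpow_add_r, Cpow_involutive_even by auto. ring. Qed.

Definition odd_prod (q s : C) (n : nat) : C := cprod (fun k => 1 + s * q ^ (2 * k + 1))%C n.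

Lemma cprod_odd_monomial (s w : C) n :
  cprod (fun k => s * w ^ (2 * k + 1))%C n = (s ^ n * w ^ (n * n))%C.
Proof.
  induction n as [|n IH]; [simpl; ring |].
  change (cprod (fun k => s * w ^ (2 * k + 1))%C (S n))
    with (cprod (fun k => s * w ^ (2 * k + 1))%C n * (s * w ^ (2 * n + 1)))%C.
  rewrite IH. replace (S n * S n)%nat with (n * n + (2 * n + 1))%nat by lia.
  rewrite (Cpow_add_r w (n * n)), (Cpow_S s n). ring.
Qed.

Section FiniteTripleProduct.

Variables (q s : C) (n : nat).
Hypotheses (Hq : q <> RtoC 0) (Hs : (s * s = 1)%C).

(* The q-binomial theorem is applied with [Q = q^2] and [x = s q^(1-2n)]. *)
Let x := (s * q * (/ q) ^ (2 * n))%C.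

Lemma cprod_qbinomial_odd_prod :
  cprod (fun i => 1 + x * (q * q) ^ i)%C (2 * n) =
  (s ^ n * (/ q) ^ (n * n) * (odd_prod q s n * odd_prod q s n))%C.
Proof.
  replace (2 * n)%nat with (n + n)%nat by lia. rewrite cprod_split.
  assert (Hhigh : cprod (fun i => 1 + x * (q * q) ^ (n + i))%C n = odd_prod q s n).
  { apply cprod_ext. intros i _. unfold x. f_equal. rewrite Cpow_mult_l, !Cpow_add_r.
    transitivity (s * (q ^ n * q ^ n * (/ q) ^ (2 * n)) * (q * q ^ i * q ^ i))%C; [ring |].
    replace (q ^ n * q ^ n)%C with (q ^ (2 * n))%C by (rewrite <- Cpow_add_r; f_equal; lia).
    rewrite Cpow_mul_inv_pow by auto. replace (2 * i)%nat with (i + i)%nat by lia.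
    rewrite Cpow_add_r. ring. }
  assert (Hlow : forall i, (i < n)%nat -> (1 + x * (q * q) ^ (n - 1 - i))%C
                 = ((s * (/ q) ^ (2 * i + 1)) * (1 + s * q ^ (2 * i + 1)))%C).
  { intros i Hi. unfold x. rewrite Cpow_mult_l.
    transitivity (1 + s * (q ^ (1 + (n - 1 - i) + (n - 1 - i))
                           * (/ q) ^ ((1 + (n - 1 - i) + (n - 1 - i)) + (2 * i + 1))))%C.
    { replace (1 + (n - 1 - i) + (n - 1 - i) + (2 * i + 1))%nat with (2 * n)%nat by lia.
      rewrite !Cpow_add_r. simpl (q ^ 1)%C. ring. }
    rewrite Cpow_mul_inv_pow_add by auto.
    replace (s * (/ q) ^ (2 * i + 1) * (1 + s * q ^ (2 * i + 1)))%C
      with (s * (/ q) ^ (2 * i + 1) + (s * s) * (q ^ (2 * i + 1) * (/ q) ^ (2 * i + 1)))%C by ring.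
    rewrite Hs, Cpow_mul_inv_pow by auto. ring. }
  rewrite Hhigh, cprod_rev, (cprod_ext _ _ n Hlow), cprod_mult, cprod_odd_monomial.
  unfold odd_prod. ring.
Qed.

Let term i := (qbinom (q * q) (2 * n) i * (q * q) ^ triangular i * x ^ i)%C.

Lemma triple_product_term_pos j :
  (s ^ n * q ^ (n * n) * term (n + j))%C = (qbinom (q * q) (2 * n) (n + j) * s ^ j * q ^ (j * j))%C.
Proof.
  unfold term, x. rewrite !Cpow_mult_l.
  transitivity (qbinom (q * q) (2 * n) (n + j) * s ^ (2 * n + j)
    * (q ^ (n * n + triangular (n + j) + triangular (n + j) + (n + j)) * (/ q) ^ (2 * n * (n + j))))%C.
  { rewrite <- Cpow_mult_r, !Cpow_add_r, Nat.mul_add_distr_l, !Cpow_add_r.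
    replace (2 * n)%nat with (n + n)%nat by lia. rewrite !Cpow_add_r. ring. }
  rewrite Cpow_involutive_even_add by auto.
  rewrite (Cpow_mul_inv_pow_sub q _ (2 * n * (n + j)) (j * j))
    by (auto; pose proof (triangular_double (n + j)); nia).
  ring.
Qed.

Lemma triple_product_term_neg j : (j < n)%nat ->
  (s ^ n * q ^ (n * n) * term (n - 1 - j))%C =
  (qbinom (q * q) (2 * n) (n - 1 - j) * s ^ S j * q ^ (S j * S j))%C.
Proof.
  intros Hj. unfold term, x. set (k := (n - 1 - j)%nat).
  assert (Hn : n = (k + j + 1)%nat) by (unfold k; lia).
  rewrite !Cpow_mult_l.
  transitivity (qbinom (q * q) (2 * n) k * s ^ (2 * k + S j)
    * (q ^ (n * n + triangular k + triangular k + k) * (/ q) ^ (2 * n * k)))%C.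
  { replace (2 * k + S j)%nat with (n + k)%nat by lia.
    rewrite <- Cpow_mult_r, !Cpow_add_r. ring. }
  rewrite Cpow_involutive_even_add by auto.
  rewrite (Cpow_mul_inv_pow_sub q _ (2 * n * k) (S j * S j))
    by (auto; pose proof (triangular_double k); rewrite Hn; nia).
  ring.
Qed.

Theorem finite_triple_product :
  (odd_prod q s n * odd_prod q s n)%C =
  (csum (fun j => qbinom (q * q) (2 * n) (n + j) * s ^ j * q ^ (j * j)) (S n)
   + csum (fun j => qbinom (q * q) (2 * n) (n - 1 - j) * s ^ S j * q ^ (S j * S j)) n)%C.
Proof.
  pose proof (qbinomial_theorem (q * q) (2 * n) x) as QB.
  rewrite cprod_qbinomial_odd_prod in QB. fold term in QB.
  assert (K : (s ^ n * q ^ (n * n) * (s ^ n * (/ q) ^ (n * n)))%C = RtoC 1).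
  { transitivity (s ^ (2 * n) * (q ^ (n * n) * (/ q) ^ (n * n)))%C.
    { replace (2 * n)%nat with (n + n)%nat by lia. rewrite Cpow_add_r. ring. }
    rewrite Cpow_involutive_even, Cpow_mul_inv_pow by auto. ring. }
  transitivity (s ^ n * q ^ (n * n) * csum term (S (2 * n)))%C.
  { rewrite <- QB, Cmult_assoc, K. ring. }
  replace (S (2 * n)) with (n + S n)%nat by lia. rewrite csum_split, csum_rev.
  rewrite Cmult_plus_distr_l, <- !csum_scal, Cplus_comm. f_equal.
  - apply csum_ext. intros j _. apply triple_product_term_pos.
  - apply csum_ext. intros j Hj. apply triple_product_term_neg. exact Hj.
Qed.

End FiniteTripleProduct.

(** * Jacobi's triple product in the limit *)

Lemma rsum_le_geom a t n : 0 <= t < 1 -> (forall k, a k <= t ^ k) -> rsum a n <= 1 / (1 - t).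
Proof.
  intros. eapply Rle_trans; [apply rsum_le with (g := fun k => t ^ k); auto |].
  apply rsum_geom_le; auto.
Qed.

Lemma exp_le_compat x y : x <= y -> exp x <= exp y.
Proof. intros [H | ->]; [left; apply exp_increasing; exact H | lra]. Qed.

Lemma exp_neg_le_1_minus x r : 0 <= x <= r -> r < 1 -> exp (- (x / (1 - r))) <= 1 - x.
Proof.
  intros Hx Hr.
  assert (E : 1 + x / (1 - r) <= exp (x / (1 - r))) by apply exp_ineq1_le.
  assert (K : 1 <= (1 - x) * (1 + x / (1 - r))).
  { replace ((1 - x) * (1 + x / (1 - r))) with (1 + x * (r - x) / (1 - r)) by (field; lra).
    assert (0 <= x * (r - x) / (1 - r)) by (apply Rdiv_le_0_compat; nra). lra. }
  rewrite exp_Ropp. apply Rmult_le_reg_r with (exp (x / (1 - r))); [apply exp_pos |].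
  rewrite Rinv_l by (apply Rgt_not_eq, exp_pos).
  eapply Rle_trans; [exact K | apply Rmult_le_compat_l; lra].
Qed.

Lemma Cmod_cprod_ge f a r n : (forall k, Cmod (f k - 1)%C <= a k) -> (forall k, 0 <= a k <= r) ->
  r < 1 -> exp (- (rsum a n / (1 - r))) <= Cmod (cprod f n).
Proof.
  intros Hf Ha Hr. induction n as [|n IH]; simpl.
  { rewrite Cmod_1. unfold Rdiv. rewrite Rmult_0_l, Ropp_0, exp_0. lra. }
  rewrite Cmod_mult.
  replace (- ((rsum a n + a n) / (1 - r))) with (- (rsum a n / (1 - r)) + - (a n / (1 - r)))
    by (field; lra).
  rewrite exp_plus. apply Rmult_le_compat; try (left; apply exp_pos); auto.
  eapply Rle_trans; [apply exp_neg_le_1_minus; auto |].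
  pose proof (Cmod_reverse_triangle 1 (1 - f n)%C) as T.
  replace (1 - (1 - f n))%C with (f n) in T by ring.
  rewrite Cmod_1, Cmod_minus_sym in T. specialize (Hf n). lra.
Qed.

Lemma Cmod_cprod_le f a n : (forall k, Cmod (f k - 1)%C <= a k) -> Cmod (cprod f n) <= exp (rsum a n).
Proof.
  intros Hf. induction n as [|n IH]; simpl.
  { rewrite Cmod_1, exp_0. lra. }
  rewrite Cmod_mult, exp_plus. apply Rmult_le_compat; try apply Cmod_ge_0; auto.
  eapply Rle_trans; [| apply exp_ineq1_le].
  replace (f n) with ((f n - 1) + 1)%C by ring.
  eapply Rle_trans; [apply Cmod_triangle |]. rewrite Cmod_1. specialize (Hf n). lra.
Qed.

Definition cprod_lower (r : R) : R := exp (- (1 / (1 - r) / (1 - r))).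
Definition cprod_upper (r : R) : R := exp (1 / (1 - r)).

Lemma cprod_lower_pos r : 0 < cprod_lower r.
Proof. apply exp_pos. Qed.

Lemma Cmod_cprod_bounds f r n : 0 <= r < 1 -> (forall k, Cmod (f k - 1)%C <= r ^ S k) ->
  cprod_lower r <= Cmod (cprod f n) <= cprod_upper r.
Proof.
  intros Hr Hf.
  assert (Hs : rsum (fun k => r ^ S k) n <= 1 / (1 - r)).
  { apply rsum_le_geom; auto. intros k. apply pow_le_pow_contract; lia || lra. }
  split.
  - eapply Rle_trans; [| apply (Cmod_cprod_ge f (fun k => r ^ S k) r n Hf); try lra].
    + unfold cprod_lower. apply exp_le_compat, Ropp_le_contravar.
      unfold Rdiv at 1 3. apply Rmult_le_compat_r; [left; apply Rinv_0_lt_compat; lra | exact Hs].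
    + intros k. split; [apply pow_le; lra |]. simpl.
      pose proof (pow_le_one r k ltac:(lra)). pose proof (pow_le r k ltac:(lra)). nra.
  - eapply Rle_trans; [apply (Cmod_cprod_le f (fun k => r ^ S k) n Hf) |].
    apply exp_le_compat. exact Hs.
Qed.

Section TripleProductLimit.

Variable q : C.
Hypotheses (Hq0 : q <> RtoC 0) (Hq1 : Cmod q < 1).

Let Q := (q * q)%C.
Let r2 := Cmod Q.

Lemma Cmod_q_bounds : 0 <= Cmod q < 1.
Proof. split; [apply Cmod_ge_0 | exact Hq1]. Qed.

Lemma Cmod_Q_bounds : 0 <= r2 < 1.
Proof. unfold r2, Q. rewrite Cmod_mult. pose proof Cmod_q_bounds. nra. Qed.

Lemma Cmod_qpoch_bounds m : cprod_lower r2 <= Cmod (qpoch Q m) <= cprod_upper r2.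
Proof.
  apply Cmod_cprod_bounds; [apply Cmod_Q_bounds |]. intros k.
  replace (1 - Q ^ S k - 1)%C with (- Q ^ S k)%C by ring.
  rewrite Cmod_opp, Cmod_pow. apply Rle_refl.
Qed.

Lemma qpoch_neq_0 m : qpoch Q m <> RtoC 0.
Proof.
  intros E. pose proof (Cmod_qpoch_bounds m). pose proof (cprod_lower_pos r2).
  rewrite E, Cmod_0 in *. lra.
Qed.

Lemma qbinom_eq_qpoch N i : (i <= N)%nat ->
  qbinom Q N i = (qpoch Q N / (qpoch Q i * qpoch Q (N - i)))%C.
Proof.
  intros H. rewrite <- (qbinom_qpoch Q N i H). field. split; apply qpoch_neq_0.
Qed.

Lemma qbinom_symm N i : (i <= N)%nat -> qbinom Q N i = qbinom Q N (N - i).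
Proof.
  intros H. rewrite !qbinom_eq_qpoch by lia. replace (N - (N - i))%nat with i by lia.
  rewrite (Cmult_comm (qpoch Q (N - i))). reflexivity.
Qed.

Lemma qbinom_central_neq_0 n : qbinom Q (2 * n) n <> RtoC 0.
Proof.
  intros E. apply (qpoch_neq_0 (2 * n)). rewrite <- (qbinom_qpoch Q (2 * n) n), E by lia. ring.
Qed.

Let central_ratio (n j : nat) : C := (qbinom Q (2 * n) (n + j) / qbinom Q (2 * n) n)%C.

Lemma central_ratio_eq n j : (j <= n)%nat ->
  central_ratio n j = (qpoch Q n * qpoch Q n / (qpoch Q (n + j) * qpoch Q (n - j)))%C.
Proof.
  intros H. unfold central_ratio. rewrite !qbinom_eq_qpoch by lia.
  replace (2 * n - (n + j))%nat with (n - j)%nat by lia. replace (2 * n - n)%nat with n by lia.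
  field. repeat split; apply qpoch_neq_0.
Qed.

Let ratio_bound := (cprod_upper r2 * cprod_upper r2 / (cprod_lower r2 * cprod_lower r2))%R.

Lemma ratio_bound_nonneg : 0 <= ratio_bound.
Proof.
  unfold ratio_bound, cprod_upper. pose proof (cprod_lower_pos r2).
  apply Rmult_le_pos; [pose proof (exp_pos (1 / (1 - r2))); nra |].
  left. apply Rinv_0_lt_compat. nra.
Qed.

Lemma Cmod_central_ratio_le n j : (j <= n)%nat -> Cmod (central_ratio n j) <= ratio_bound.
Proof.
  intros H. rewrite central_ratio_eq by auto.
  rewrite Cmod_div by (apply Cmult_neq_0; apply qpoch_neq_0). rewrite !Cmod_mult.
  pose proof (Cmod_qpoch_bounds n). pose proof (Cmod_qpoch_bounds (n + j)).
  pose proof (Cmod_qpoch_bounds (n - j)). pose proof (cprod_lower_pos r2).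
  unfold ratio_bound. apply Rmult_le_compat.
  - apply Rmult_le_pos; apply Cmod_ge_0.
  - left. apply Rinv_0_lt_compat. nra.
  - apply Rmult_le_compat; try apply Cmod_ge_0; lra.
  - apply Rinv_le_contravar; [nra | apply Rmult_le_compat; lra].
Qed.

Let qpoch_tail (m j : nat) : C := cprod (fun k => 1 - Q ^ (m + k + 1))%C j.

Lemma qpoch_add m j : qpoch Q (m + j) = (qpoch Q m * qpoch_tail m j)%C.
Proof.
  unfold qpoch, qpoch_tail. rewrite cprod_split. f_equal.
  apply cprod_ext. intros. do 3 f_equal. lia.
Qed.

Lemma qpoch_tail_cv j : cvC (fun m => qpoch_tail m j) (RtoC 1).
Proof.
  induction j as [|j IH]; [apply (cvC_ext (fun _ => RtoC 1)); [reflexivity | apply cvC_const] |].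
  assert (Hpow : cvC (fun m => Q ^ (m + j + 1))%C (RtoC 0)).
  { eapply cvC_ext; [| apply (cvC_pow_0 Q (j + 1)), Cmod_Q_bounds]. intros m. simpl. f_equal. lia. }
  pose proof (cvC_mult _ _ _ _ IH (cvC_minus _ _ _ _ (cvC_const (RtoC 1)) Hpow)) as H.
  replace (RtoC 1 * (RtoC 1 - RtoC 0))%C with (RtoC 1) in H by ring. exact H.
Qed.

Lemma central_ratio_cv j : cvC (fun n => central_ratio n j) (RtoC 1).
Proof.
  apply cvC_ext_eventually with (fun n => qpoch_tail (n - j) j / qpoch_tail n j)%C j.
  { intros n Hn. rewrite central_ratio_eq, qpoch_add by auto.
    replace (qpoch Q n) with (qpoch Q (n - j + j)) by (f_equal; lia).
    rewrite qpoch_add. replace (n - j + j)%nat with n by lia.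
    assert (qpoch_tail n j <> RtoC 0).
    { intros E. apply (qpoch_neq_0 (n + j)). rewrite qpoch_add, E. ring. }
    assert (qpoch_tail (n - j) j <> RtoC 0).
    { intros E. apply (qpoch_neq_0 n). replace n with (n - j + j)%nat by lia. rewrite qpoch_add, E. ring. }
    pose proof (qpoch_neq_0 n). pose proof (qpoch_neq_0 (n - j)).
    field. auto. }
  assert (Hshift : cvC (fun n => qpoch_tail (n - j) j) (RtoC 1)).
  { apply cvC_shift_inv with j. eapply cvC_ext; [| apply qpoch_tail_cv].
    intros m. simpl. rewrite Nat.add_sub. reflexivity. }
  pose proof (cvC_div _ _ _ _ Hshift (qpoch_tail_cv j) C1_nz) as H.
  replace (RtoC 1 / RtoC 1)%C with (RtoC 1) in H by (field; apply C1_nz). exact H.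
Qed.

Let truncated_term (s : C) (n j : nat) : C :=
  if (j <=? n)%nat then (central_ratio n j * s ^ j * q ^ (j * j))%C else RtoC 0.

Lemma odd_prod_sq_div_central s n : (s * s = 1)%C ->
  (odd_prod q s n * odd_prod q s n / qbinom Q (2 * n) n)%C =
  (SeriesC (truncated_term s n) + SeriesC (fun j => truncated_term s n (S j)))%C.
Proof.
  intros Hs. rewrite (SeriesC_finite (truncated_term s n) (S n)).
  2: { intros i Hi. unfold truncated_term. destruct (Nat.leb_spec i n); [lia | reflexivity]. }
  rewrite (SeriesC_finite (fun j => truncated_term s n (S j)) n).
  2: { intros i Hi. unfold truncated_term. destruct (Nat.leb_spec (S i) n); [lia | reflexivity]. }
  rewrite finite_triple_product by auto. fold Q.
  unfold Cdiv. rewrite Cmult_plus_distr_r, !(Cmult_comm _ (/ qbinom Q (2 * n) n)), <- !csum_scal.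
  f_equal; apply csum_ext; intros j Hj; unfold truncated_term, central_ratio.
  - destruct (Nat.leb_spec j n); [| lia]. unfold Cdiv. ring.
  - destruct (Nat.leb_spec (S j) n); [| lia]. rewrite (qbinom_symm (2 * n) (n - 1 - j)) by lia.
    replace (2 * n - (n - 1 - j))%nat with (n + S j)%nat by lia. unfold Cdiv. ring.
Qed.

Lemma Cmod_truncated_term_le s n j : Cmod s = 1 ->
  Cmod (truncated_term s n j) <= ratio_bound * Cmod q ^ j.
Proof.
  intros Hs. pose proof ratio_bound_nonneg. pose proof Cmod_q_bounds.
  unfold truncated_term. destruct (Nat.leb_spec j n).
  - rewrite !Cmod_mult, !Cmod_pow, Hs, pow1, Rmult_1_r.
    apply Rmult_le_compat; try apply Cmod_ge_0; try (apply pow_le; lra).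
    + apply Cmod_central_ratio_le; auto.
    + apply pow_le_pow_contract; [lra | nia].
  - rewrite Cmod_0. apply Rmult_le_pos; auto. apply pow_le; lra.
Qed.

Lemma truncated_term_cv s j : cvC (fun n => truncated_term s n j) (s ^ j * q ^ (j * j))%C.
Proof.
  apply cvC_ext_eventually with (fun n => central_ratio n j * (s ^ j * q ^ (j * j)))%C j.
  { intros n Hn. unfold truncated_term. destruct (Nat.leb_spec j n); [ring | lia]. }
  pose proof (cvC_mult _ _ _ _ (central_ratio_cv j) (cvC_const (s ^ j * q ^ (j * j))%C)) as H.
  rewrite Cmult_1_l in H. exact H.
Qed.

Let theta_nat (s : C) : C :=
  (SeriesC (fun j => s ^ j * q ^ (j * j)) + SeriesC (fun j => s ^ S j * q ^ (S j * S j)))%C.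

Lemma odd_prod_sq_div_central_cv s : (s * s = 1)%C -> Cmod s = 1 ->
  cvC (fun n => odd_prod q s n * odd_prod q s n / qbinom Q (2 * n) n)%C (theta_nat s).
Proof.
  intros Hs Hm. pose proof Cmod_q_bounds.
  eapply cvC_ext; [intros n; symmetry; apply odd_prod_sq_div_central; auto |].
  apply cvC_plus; apply tannery with (c := ratio_bound) (t := Cmod q); auto;
    intros; try apply truncated_term_cv.
  - apply Cmod_truncated_term_le; auto.
  - eapply Rle_trans; [apply Cmod_truncated_term_le; auto |].
    apply Rmult_le_compat_l; [apply ratio_bound_nonneg | apply pow_le_pow_contract; lia || lra].
Qed.

Lemma theta_nat_sign_pow b : theta_nat (sign_pow b 1) = theta q b.
Proof.
  assert (Hsq : forall j, Z.to_nat (Z.of_nat j * Z.of_nat j) = (j * j)%nat) by (intros; lia).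
  unfold theta_nat, theta, ZSeriesC. f_equal; apply SeriesC_ext; intros j.
  - rewrite sign_pow_nat, Hsq. reflexivity.
  - replace (- Z.of_nat j - 1)%Z with (- Z.of_nat (S j))%Z by lia.
    rewrite sign_pow_opp, sign_pow_nat. do 2 f_equal. lia.
Qed.

Lemma Cmod_odd_prod_ge s n : Cmod s = 1 -> cprod_lower (Cmod q) <= Cmod (odd_prod q s n).
Proof.
  intros Hs. pose proof Cmod_q_bounds. apply Cmod_cprod_bounds; auto. intros k.
  replace (1 + s * q ^ (2 * k + 1) - 1)%C with (s * q ^ (2 * k + 1))%C by ring.
  rewrite Cmod_mult, Hs, Cmod_pow, Rmult_1_l. apply pow_le_pow_contract; lia || lra.
Qed.

Lemma theta3_neq_0 : theta q true <> RtoC 0.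
Proof.
  assert (Hs : Cmod (RtoC 1) = 1) by apply Cmod_1.
  pose proof (odd_prod_sq_div_central_cv (RtoC 1) ltac:(ring) Hs) as Hcv.
  change (RtoC 1) with (sign_pow true 1) in Hcv at 3. rewrite theta_nat_sign_pow in Hcv.
  set (lq := cprod_lower (Cmod q)). set (lQ := cprod_lower r2). set (uQ := cprod_upper r2).
  assert (Hl : 0 < lq /\ 0 < lQ) by (split; apply cprod_lower_pos).
  assert (HuQ : 0 < uQ) by apply exp_pos.
  assert (Hc : 0 < lq * lq / (uQ / (lQ * lQ))).
  { apply Rdiv_lt_0_compat; [nra | apply Rdiv_lt_0_compat; nra]. }
  enough (lq * lq / (uQ / (lQ * lQ)) <= Cmod (theta q true))
    by (intros E; rewrite E, Cmod_0 in *; lra).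
  apply (cvC_Cmod_ge _ _ _ Hcv). intros n.
  assert (Hcentral : Cmod (qbinom Q (2 * n) n) <= uQ / (lQ * lQ)).
  { rewrite qbinom_eq_qpoch by lia. replace (2 * n - n)%nat with n by lia.
    rewrite Cmod_div by (apply Cmult_neq_0; apply qpoch_neq_0). rewrite Cmod_mult.
    pose proof (Cmod_qpoch_bounds (2 * n)) as B1. pose proof (Cmod_qpoch_bounds n) as B2.
    fold lQ uQ in B1, B2.
    unfold Rdiv. apply Rmult_le_compat; [apply Cmod_ge_0 | left; apply Rinv_0_lt_compat; nra | lra |].
    apply Rinv_le_contravar; [nra | apply Rmult_le_compat; lra]. }
  pose proof (Cmod_odd_prod_ge (RtoC 1) n Hs) as Hodd. fold lq in Hodd.
  pose proof (proj1 (Cmod_gt_0 _) (qbinom_central_neq_0 n)).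
  rewrite Cmod_div by apply qbinom_central_neq_0. rewrite Cmod_mult.
  unfold Rdiv at 2. apply Rmult_le_compat; [nra | left; apply Rinv_0_lt_compat; nra | nra |].
  apply Rinv_le_contravar; auto.
Qed.

Theorem odd_prod_ratio_cv :
  cvC (fun n => (odd_prod q (RtoC (-1)) n * odd_prod q (RtoC (-1)) n)
                / (odd_prod q (RtoC 1) n * odd_prod q (RtoC 1) n))%C
      (theta q false / theta q true)%C.
Proof.
  assert (Hm1 : Cmod (RtoC 1) = 1) by apply Cmod_1.
  assert (Hm2 : Cmod (RtoC (-1)) = 1) by (rewrite Cmod_R, Rabs_left; lra).
  assert (Hs2 : (RtoC (-1) * RtoC (-1) = 1)%C) by (apply injective_projections; simpl; ring).
  pose proof (odd_prod_sq_div_central_cv (RtoC 1) ltac:(ring) Hm1) as C1.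
  pose proof (odd_prod_sq_div_central_cv (RtoC (-1)) Hs2 Hm2) as C2.
  change (RtoC 1) with (sign_pow true 1) in C1 at 3.
  change (RtoC (-1)) with (sign_pow false 1) in C2 at 3.
  rewrite theta_nat_sign_pow in C1, C2.
  eapply cvC_ext; [| apply (cvC_div _ _ _ _ C2 C1 theta3_neq_0)].
  intros n. simpl. field. repeat split; try apply qbinom_central_neq_0.
  intros E. pose proof (Cmod_odd_prod_ge (RtoC 1) n Hm1) as H.
  rewrite E, Cmod_0 in H. pose proof (cprod_lower_pos (Cmod q)). lra.
Qed.

End TripleProductLimit.

(** * The function b as a quotient of theta functions *)

Lemma qpow_add tau a b : qpow tau (a + b) = (qpow tau a * qpow tau b)%C.
Proof.
  unfold qpow.
  replace (-2 * PI * (a + b) * Im tau) with (-2 * PI * a * Im tau + -2 * PI * b * Im tau) by ring.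
  replace (2 * PI * (a + b) * Re tau) with (2 * PI * a * Re tau + 2 * PI * b * Re tau) by ring.
  rewrite exp_plus, cos_plus, sin_plus. apply injective_projections; simpl; ring.
Qed.

Lemma qpow_0 tau : qpow tau 0 = RtoC 1.
Proof.
  unfold qpow. rewrite !Rmult_0_r, !Rmult_0_l, exp_0, cos_0, sin_0.
  apply injective_projections; simpl; ring.
Qed.

Lemma qpow_nat_mul tau k r : qpow tau (INR k * r) = (qpow tau r ^ k)%C.
Proof.
  induction k as [|k IH]; [rewrite Rmult_0_l; apply qpow_0 |].
  rewrite S_INR, Rmult_plus_distr_r, Rmult_1_l, qpow_add, IH. simpl. ring.
Qed.

Lemma Cmod_qpow tau r : Cmod (qpow tau r) = exp (-2 * PI * r * Im tau).
Proof.
  unfold qpow, Cmod. simpl. set (e := exp _). set (a := 2 * PI * r * Re tau).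
  replace (e * cos a * (e * cos a * 1) + e * sin a * (e * sin a * 1))
    with (Rsqr e * (Rsqr (sin a) + Rsqr (cos a))) by (unfold Rsqr; ring).
  rewrite sin2_cos2, Rmult_1_r. apply sqrt_Rsqr. left. apply exp_pos.
Qed.

Lemma Im_double tau : Im (RtoC 2 * tau)%C = 2 * Im tau.
Proof. destruct tau. unfold Im. simpl. ring. Qed.

Lemma qpow_double tau r : qpow (RtoC 2 * tau)%C r = qpow tau (2 * r).
Proof.
  unfold qpow. rewrite Im_double. destruct tau as [a b]. unfold Re, Im. simpl.
  replace (2 * a - 0 * b) with (2 * a) by ring.
  replace (-2 * PI * r * (2 * b)) with (-2 * PI * (2 * r) * b) by ring.
  replace (2 * PI * r * (2 * a)) with (2 * PI * (2 * r) * a) by ring. reflexivity.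
Qed.

Lemma qpow_quarter_bounds tau : 0 < Im tau ->
  qpow tau (/ 4) <> RtoC 0 /\ Cmod (qpow tau (/ 4)) < 1.
Proof.
  intros H. split.
  - apply Cmod_gt_0. rewrite Cmod_qpow. apply exp_pos.
  - rewrite Cmod_qpow, <- exp_0. apply exp_increasing. pose proof PI_RGT_0. nra.
Qed.

Lemma qpow_quarter_double tau :
  qpow (RtoC 2 * tau)%C (/ 4) = (qpow tau (/ 4) * qpow tau (/ 4))%C.
Proof.
  rewrite qpow_double. replace (2 * / 4) with (INR 2 * / 4) by (simpl; ring).
  rewrite qpow_nat_mul. simpl. ring.
Qed.

Lemma one_plus_neq_0 z : Cmod z < 1 -> (1 + z)%C <> RtoC 0.
Proof.
  intros H E. pose proof (Cmod_reverse_triangle 1 (- z)%C) as T.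
  replace (1 - - z)%C with (1 + z)%C in T by ring. rewrite E, Cmod_0, Cmod_opp, Cmod_1 in T. lra.
Qed.

Lemma bpartial_eq_odd_prod tau N : 0 < Im tau ->
  let p := qpow tau (/ 4) in
  bpartial tau N = ((odd_prod p (RtoC (-1)) N * odd_prod p (RtoC (-1)) N) /
                    (odd_prod p (RtoC 1) N * odd_prod p (RtoC 1) N))%C.
Proof.
  intros H p. destruct (qpow_quarter_bounds tau H) as [Hp0 Hp1]. fold p in Hp0, Hp1.
  assert (Hexp : forall k, qpow tau (INR (S k) / 2 - / 4) = (p ^ (2 * k + 1))%C).
  { intros k. unfold p. rewrite <- qpow_nat_mul. f_equal.
    rewrite plus_INR, mult_INR, S_INR. simpl. field. }
  assert (Hsmall : forall k, Cmod (p ^ (2 * k + 1))%C < 1).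
  { intros k. rewrite Cmod_pow. apply pow_lt_1_compat; [split; [apply Cmod_ge_0 | exact Hp1] | lia]. }
  induction N as [|N IH]; [unfold odd_prod; simpl; field; apply C1_nz |].
  simpl bpartial. rewrite IH. unfold bfactor. cbv zeta. rewrite Hexp.
  assert (Hodd : odd_prod p (RtoC 1) N <> RtoC 0).
  { intros E. pose proof (Cmod_odd_prod_ge p Hp1 (RtoC 1) N Cmod_1) as B.
    rewrite E, Cmod_0 in B. pose proof (cprod_lower_pos (Cmod p)). lra. }
  pose proof (one_plus_neq_0 _ (Hsmall N)).
  change (odd_prod p ?s (S N)) with (odd_prod p s N * (1 + s * p ^ (2 * N + 1)))%C.
  field. split; auto.
Qed.

Lemma bfun_eq_theta tau : 0 < Im tau ->
  let p := qpow tau (/ 4) in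
  bfun tau = (2 * (theta p false / theta p true))%C.
Proof.
  intros H p. destruct (qpow_quarter_bounds tau H) as [Hp0 Hp1].
  unfold bfun. fold (limC (bpartial tau)). f_equal. apply limC_cvC.
  eapply cvC_ext; [| apply (odd_prod_ratio_cv p Hp0 Hp1)].
  intros n. symmetry. apply bpartial_eq_odd_prod. exact H.
Qed.

(** * The modular equations *)

Lemma bfun_modular_eq tau : 0 < Im tau ->
  let x := bfun tau in let y := bfun (RtoC 2 * tau)%C in
  (x * x * y * y + 4 * y * y - 16 * x = 0)%C.
Proof.
  intros H x y.
  assert (H2 : 0 < Im (RtoC 2 * tau)%C) by (rewrite Im_double; lra).
  destruct (qpow_quarter_bounds tau H) as [Hp0 Hp1].
  unfold x, y. rewrite (bfun_eq_theta tau H), (bfun_eq_theta _ H2), qpow_quarter_double.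
  set (p := qpow tau (/ 4)) in *.
  assert (Hpp1 : Cmod (p * p)%C < 1) by (rewrite Cmod_mult; pose proof (Cmod_ge_0 p); nra).
  pose proof (theta3_neq_0 p Hp0 Hp1) as N1.
  pose proof (theta3_neq_0 (p * p)%C (Cmult_neq_0 _ _ Hp0 Hp0) Hpp1) as N2.
  pose proof (theta3_sq_plus_theta4_sq p Hp1) as I1. pose proof (theta3_mul_theta4 p Hp1) as I2.
  set (T := theta p true) in *. set (F := theta p false) in *.
  set (T2 := theta (p * p) true) in *. set (F2 := theta (p * p) false) in *.
  transitivity (16 / (T * T * (T2 * T2)) * (F2 * F2 * (T * T + F * F) - 2 * (T * F) * (T2 * T2)))%C.
  - field. auto.
  - rewrite I1, I2. ring.
Qed.

Lemma modular_eq_compose (x y z : C) :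
  (x * x * y * y + 4 * y * y - 16 * x = 0)%C -> (y * y * z * z + 4 * z * z - 16 * y = 0)%C ->
  ((x + 2) ^ 4 * z ^ 4 = 2 ^ 8 * (x ^ 3 + 4 * x))%C.
Proof.
  intros Hxy Hyz.
  assert (A : (y * y * (x * x + 4) = 16 * x)%C).
  { transitivity ((x * x * y * y + 4 * y * y - 16 * x) + 16 * x)%C; [ring | rewrite Hxy; ring]. }
  assert (B : (z * z * (y * y + 4) = 16 * y)%C).
  { transitivity ((y * y * z * z + 4 * z * z - 16 * y) + 16 * y)%C; [ring | rewrite Hyz; ring]. }
  assert (K : ((y * y + 4) * (x * x + 4) = 4 * (x + 2) ^ 2)%C).
  { transitivity (y * y * (x * x + 4) + 4 * (x * x + 4))%C; [ring | rewrite A; ring]. }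
  assert (S : (16 * ((x + 2) ^ 4 * z ^ 4) = 16 * (2 ^ 8 * (x ^ 3 + 4 * x)))%C).
  { transitivity ((4 * (x + 2) ^ 2) * (4 * (x + 2) ^ 2) * (z * z) * (z * z))%C; [ring |].
    rewrite <- K.
    transitivity ((z * z * (y * y + 4)) * (z * z * (y * y + 4)) * (x * x + 4) * (x * x + 4))%C;
      [ring |].
    rewrite B.
    transitivity (256 * (y * y * (x * x + 4)) * (x * x + 4))%C; [ring |].
    rewrite A. ring. }
  transitivity (/ 16 * (16 * ((x + 2) ^ 4 * z ^ 4)))%C; [field |].
  rewrite S. field.
Qed.

Theorem proposition7 (tau : C) (Htau : (0 < Im tau)%R) :
  (let x := bfun tau in
   let y := bfun (Cmult (RtoC 2) tau) in
   (x * x * y * y + 4 * y * y - 16 * x = 0)%C)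
  /\
  (let b1 := bfun tau in
   let b4 := bfun (Cmult (RtoC 4) tau) in
   ((b1 + 2) ^ 4 * b4 ^ 4 = 2 ^ 8 * (b1 ^ 3 + 4 * b1))%C).
Proof.
  assert (H2 : 0 < Im (RtoC 2 * tau)%C) by (rewrite Im_double; lra).
  split; [apply bfun_modular_eq, Htau |].
  apply modular_eq_compose with (y := bfun (RtoC 2 * tau)%C).
  - apply bfun_modular_eq, Htau.
  - replace (RtoC 4 * tau)%C with (RtoC 2 * (RtoC 2 * tau))%C by ring.
    apply bfun_modular_eq, H2.
Qed.
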